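(* Let $q>1$, $p=\frac{q}{q-1}$, and assume Hypothesis (H$_q$). Then for all $x\in[a,b]$, $\lambda\in[0,1]$ and $\theta>0$, $$\big|S_f(mx,\lambda,\theta,ma,mb)\big|\le\frac{m^\theta A_4(\theta,\lambda,p)^{\frac1p}}{b-a}\Big\{(x-a)^{\theta+1}\Big(\frac{|f'(mx)|^q+\alpha m|f'(a)|^q}{\alpha+1}\Big)^{\frac1q}+(b-x)^{\theta+1}\Big(\frac{|f'(mx)|^q+\alpha m|f'(b)|^q}{\alpha+1}\Big)^{\frac1q}\Big\}.$$
   Context: Let $\Gamma$ denote Euler's Gamma function. Given $m\in(0,1]$, $a<b$, $x\in[a,b]$, $\lambda\in[0,1]$, $\theta>0$ and a function $f$ integrable on $[ma,mb]$, the Riemann–Liouville fractional integrals appearing below are $J^\theta_{(mx)^-}f(ma)=\frac{1}{\Gamma(\theta)}\int_{ma}^{mx}(s-ma)^{\theta-1}f(s)\,ds$ and $J^\theta_{(mx)^+}f(mb)=\frac{1}{\Gamma(\theta)}\int_{mx}^{mb}(mb-s)^{\theta-1}f(s)\,ds$ (each equal to $0$ if its interval of integration is degenerate), and $$S_f(mx,\lambda,\theta,ma,mb)=(1-\lambda)m^{\theta-1}\frac{(x-a)^\theta+(b-x)^\theta}{b-a}f(mx)+\lambda m^{\theta-1}\frac{(x-a)^\theta f(ma)+(b-x)^\theta f(mb)}{b-a}-\frac{\Gamma(\theta+1)}{m(b-a)}\Big[J^\theta_{(mx)^-}f(ma)+J^\theta_{(mx)^+}f(mb)\Big].$$ $(\alpha,m)$-convexity: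 for $(\alpha,m)\in[0,1]\times(0,1]$ and an interval $K\subseteq[0,\infty)$, a function $g:K\to\mathbb{R}$ is $(\alpha,m)$-convex on $K$ if $g(tX+m(1-t)Y)\le t^\alpha g(X)+m(1-t^\alpha)g(Y)$ for all $X,Y\in K$ and $t\in[0,1]$ with $tX+m(1-t)Y\in K$ (convention $0^0=1$). Hypothesis (H$_q$): $I\subseteq[0,\infty)$ is an interval, $f:I\to\mathbb{R}$ is differentiable on the interior $I^\circ$, $m\in(0,1]$, $\alpha\in[0,1]$, $a<b$ with $ma,b\in I^\circ$, $f'$ is Lebesgue integrable on $[ma,mb]$, and $|f'|^q$ is $(\alpha,m)$-convex on $[ma,b]$. $\beta(u,v)=\int_0^1t^{u-1}(1-t)^{v-1}dt$ ($u,v>0$) is the Beta function and ${}_2F_1(a',b';c';z)=\frac{1}{\beta(b',c'-b')}\int_0^1t^{b'-1}(1-t)^{c'-b'-1}(1-zt)^{-a'}dt$ ($c'>b'>0$, $|z|<1$) the hypergeometric function. For $\theta>0$, $p>1$: $A_4(\theta,\lambda,p)=\frac{1}{\theta p+1}$ if $\lambda=0$; $A_4(\theta,\lambda,p)=\frac{\lambda^{\frac{\theta p+1}{\theta}}}{\theta}\Big\{\beta\big(\tfrac1\theta,p+1\big)+\frac{(1-\lambda)^{p+1}}{p+1}\,{}_2F_1\big(\tfrac1\theta+p+1,\,p+1;\,p+2;\,1-\lambda\big)\Big\}$ if $0<\lambda<1$; $A_4(\theta,1,p)=\frac1\theta\beta\big(p+1,\tfrac1\theta\big)$. *)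

From Stdlib Require Import Reals Lra ClassicalEpsilon.
Open Scope R_scope.

(* Real power with the conventions needed here (base x >= 0):
   x^y = exp(y ln x) for x > 0, 0^0 = 1, 0^y = 0 for y <> 0. *)
Definition rpow (x y : R) : R :=
  if Rlt_dec 0 x then Rpower x y
  else if Req_EM_T y 0 then 1 else 0.

(* Total Riemann integral on a compact interval: the Riemann integral when
   g is Riemann integrable on [c,d] (independent of the proof), arbitrary otherwise. *)
Definition RInt (g : R -> R) (c d : R) : R :=
  epsilon (inhabits 0)
    (fun r => exists pr : Riemann_integrable g c d, RiemannInt pr = r).

(* Convergent (possibly improper) Riemann integral of g over the open interval (lo,hi):
   g is Riemann integrable on every [c,d] inside (lo,hi) and the integrals over [c,d]
   tend to L as c -> lo+ and d -> hi-. *)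
Definition imp_int_conv (g : R -> R) (lo hi L : R) : Prop :=
  (forall c d, lo < c -> c <= d -> d < hi -> inhabited (Riemann_integrable g c d)) /\
  (forall eps, 0 < eps -> exists delta, 0 < delta /\
     forall c d, lo < c < lo + delta -> hi - delta < d < hi -> c <= d ->
       Rabs (RInt g c d - L) < eps).

(* Value of the integral of g over (lo,hi); 0 if the interval is degenerate. *)
Definition Integral (g : R -> R) (lo hi : R) : R :=
  if Rlt_dec lo hi then epsilon (inhabits 0) (fun L => imp_int_conv g lo hi L) else 0.

(* Euler's Gamma function: Gamma(th) = int_0^oo t^(th-1) e^(-t) dt (improper). *)
Definition gamma_conv (th L : R) : Prop :=
  (forall c d, 0 < c -> c <= d ->
     inhabited (Riemann_integrable (fun t => rpow t (th - 1) * exp (- t)) c d)) /\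
  (forall eps, 0 < eps -> exists delta, 0 < delta /\ exists M,
     forall c d, 0 < c < delta -> M < d -> c <= d ->
       Rabs (RInt (fun t => rpow t (th - 1) * exp (- t)) c d - L) < eps).

Definition Gamma (th : R) : R := epsilon (inhabits 0) (fun L => gamma_conv th L).

Definition Beta (u v : R) : R :=
  Integral (fun t => rpow t (u - 1) * rpow (1 - t) (v - 1)) 0 1.

(* Gauss hypergeometric function 2F1(a',b';c';z) via Euler's integral *)
Definition hyp2F1 (a' b' c' z : R) : R :=
  / Beta b' (c' - b') *
  Integral (fun t => rpow t (b' - 1) * rpow (1 - t) (c' - b' - 1) * rpow (1 - z * t) (- a')) 0 1.

(* Riemann-Liouville fractional integrals (mx, ma, mb are the real arguments) *)
Definition RL_left (th : R) (f : R -> R) (mx ma : R) : R :=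
  / Gamma th * Integral (fun s => rpow (s - ma) (th - 1) * f s) ma mx.
Definition RL_right (th : R) (f : R -> R) (mx mb : R) : R :=
  / Gamma th * Integral (fun s => rpow (mb - s) (th - 1) * f s) mx mb.

Definition S_f (f : R -> R) (m x lam th a b : R) : R :=
  (1 - lam) * rpow m (th - 1) * (rpow (x - a) th + rpow (b - x) th) / (b - a) * f (m * x)
  + lam * rpow m (th - 1) * (rpow (x - a) th * f (m * a) + rpow (b - x) th * f (m * b)) / (b - a)
  - Gamma (th + 1) / (m * (b - a)) * (RL_left th f (m * x) (m * a) + RL_right th f (m * x) (m * b)).

Definition alpha_m_convex (alpha m : R) (K : R -> Prop) (g : R -> R) : Prop :=
  forall X Y t, K X -> K Y -> 0 <= t <= 1 -> K (t * X + m * (1 - t) * Y) ->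
    g (t * X + m * (1 - t) * Y) <= rpow t alpha * g X + m * (1 - rpow t alpha) * g Y.

Definition is_interval (I : R -> Prop) : Prop :=
  forall x y z, I x -> I z -> x <= y <= z -> I y.
(* Interior points: Stdlib's Rtopology.interior (a neighbourhood of x is contained in I). *)

Definition A4 (th lam p : R) : R :=
  if Req_EM_T lam 0 then / (th * p + 1)
  else if Req_EM_T lam 1 then / th * Beta (p + 1) (/ th)
  else rpow lam ((th * p + 1) / th) / th *
       (Beta (/ th) (p + 1) +
        rpow (1 - lam) (p + 1) / (p + 1) * hyp2F1 (/ th + p + 1) (p + 1) (p + 2) (1 - lam)).

From Pilot Require Import Defs.
From Stdlib Require Import Reals Lra ClassicalEpsilon FunctionalExtensionality PropExtensionality Classical.
From Coquelicot Require Import Coquelicot.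
Open Scope R_scope.

(* S_f splits into a left part on [ma, mx] and a right part on [mx, mb], each a
   multiple of the side term
      T(F,u,v) = (1-lam) F(v) + lam F(u) - th/(v-u)^th int_u^v (s-u)^(th-1) F(s) ds,
   the right part being the left one of the reflected function s |-> f(-s).
   For w(s) = ((s-u)/(v-u))^th - lam one has T = [w F - th/(v-u)^th Psi]_u^v,
   Psi a primitive of (s-u)^(th-1) F, and the bracket has derivative w F'.
   Hence |T| <= int_u^v |w| |F'|; Young's inequality with a free parameter e
   bounds this by e^p/p int |w|^p + e^(-q)/q int |F'|^q, and minimising over e
   gives (int |w|^p)^(1/p) (int |F'|^q)^(1/q).  The first integral equals
   (v-u) A_4 (a Beta/hypergeometric computation), the second is bounded by
   (alpha,m)-convexity, and Gamma(th+1) = th Gamma(th) turns the fractional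
   integrals of S_f into the integrals of T. *)

Lemma rpow_Rpower x y : 0 < x -> rpow x y = Rpower x y.
Proof. intros H; unfold rpow; destruct (Rlt_dec 0 x); [reflexivity|lra]. Qed.

Lemma rpow_nonpos_base x y : x <= 0 -> y <> 0 -> rpow x y = 0.
Proof.
intros H Hy; unfold rpow; destruct (Rlt_dec 0 x); [lra|].
destruct (Req_EM_T y 0); [contradiction|reflexivity].
Qed.

Lemma rpow_0_r x : rpow x 0 = 1.
Proof.
unfold rpow; destruct (Rlt_dec 0 x); [apply Rpower_O; auto|].
destruct (Req_EM_T 0 0); [reflexivity|lra].
Qed.

Lemma rpow_0_l y : y <> 0 -> rpow 0 y = 0.
Proof. intros; apply rpow_nonpos_base; lra. Qed.

Lemma Rpower_pos x y : 0 < Rpower x y.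
Proof. apply exp_pos. Qed.

Lemma rpow_ge0 x y : 0 <= rpow x y.
Proof.
unfold rpow; destruct (Rlt_dec 0 x); [left; apply Rpower_pos|].
destruct (Req_EM_T y 0); lra.
Qed.

Lemma Rpower_1_l y : Rpower 1 y = 1.
Proof. unfold Rpower; rewrite ln_1, Rmult_0_r; apply exp_0. Qed.

Lemma rpow_1_l y : rpow 1 y = 1.
Proof. rewrite rpow_Rpower by lra; apply Rpower_1_l. Qed.

Lemma Rpower_lt_1 y th : 0 < y < 1 -> 0 < th -> Rpower y th < 1.
Proof. intros. rewrite <- (Rpower_1_l th). apply Rlt_Rpower_l; lra. Qed.

Lemma Rpower_div a b r : 0 < a -> 0 < b -> Rpower (a / b) r = Rpower a r / Rpower b r.
Proof.
intros. unfold Rpower, Rdiv. rewrite ln_mult, ln_Rinv; auto; [|apply Rinv_0_lt_compat; auto].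
rewrite <- exp_Ropp, <- exp_plus. f_equal; ring.
Qed.

Lemma Rpower_pred b r : 0 < b -> Rpower b r = Rpower b (r - 1) * b.
Proof. intros. rewrite <- (Rpower_1 b) at 3 by auto. rewrite <- Rpower_plus. f_equal; ring. Qed.

Lemma rpow_Rpower_inv y th : 0 < y -> 0 < th -> rpow (Rpower y (/ th)) th = y.
Proof. intros. rewrite rpow_Rpower by apply Rpower_pos. rewrite Rpower_mult, Rinv_l, Rpower_1; lra. Qed.

Lemma cont_of_cpt f x : continuity_pt f x -> continuous f x.
Proof. apply continuity_pt_filterlim. Qed.

Lemma cpt_const (c : R) x : continuity_pt (fun _ => c) x.
Proof. apply continuity_pt_const; intros a b; auto. Qed.

(* The epsilon-delta form of continuity, with the centre allowed. *)
Lemma cpt_eps f x : continuity_pt f x ->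
  forall eps, 0 < eps -> exists d, 0 < d /\ forall y, Rabs (y - x) < d -> Rabs (f y - f x) < eps.
Proof.
intros H eps He. destruct (H eps He) as [d [Hd Hy]]. exists d; split; auto.
intros y Hyx. destruct (Req_dec y x). subst; rewrite Rminus_eq_0, Rabs_R0; auto.
apply Hy. unfold D_x, no_cond, R_dist; simpl; unfold R_dist. repeat split; auto.
Qed.

Lemma cpt_Rpower x y : 0 < x -> continuity_pt (fun t => Rpower t y) x.
Proof.
intros H. apply derivable_continuous_pt. exists (y * Rpower x (y - 1)).
apply derivable_pt_lim_power; auto.
Qed.

Lemma cpt_rpow_pos x r : 0 < x -> continuity_pt (fun t => rpow t r) x.
Proof.
intros Hx. apply continuity_pt_locally_ext with (f := fun t => Rpower t r) (a := x); auto.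
- intros y Hy. unfold Rdist in Hy. apply Rabs_def2 in Hy. rewrite rpow_Rpower; auto; lra.
- apply cpt_Rpower; auto.
Qed.

Lemma cpt_rpow x r : 0 < r -> continuity_pt (fun t => rpow t r) x.
Proof.
intros Hr. destruct (Rlt_or_le 0 x) as [Hx|[Hx|Hx]]; [now apply cpt_rpow_pos| |].
- apply continuity_pt_locally_ext with (f := fun t => 0) (a := - x); [lra| |apply cpt_const].
  intros y Hy. unfold Rdist in Hy. apply Rabs_def2 in Hy. rewrite rpow_nonpos_base; lra.
- subst x. intros eps Heps. exists (Rpower eps (/ r)). split; [apply Rpower_pos|].
  intros y [_ Hy]. simpl in *. unfold R_dist, Rdist in *.
  rewrite rpow_0_l by lra. rewrite Rminus_0_r in *.
  destruct (Rlt_or_le 0 y).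
  + rewrite rpow_Rpower, Rabs_pos_eq by (auto; left; apply Rpower_pos).
    rewrite Rabs_pos_eq in Hy by lra.
    assert (Hlt : Rpower y r < Rpower (Rpower eps (/ r)) r) by (apply Rlt_Rpower_l; auto).
    rewrite Rpower_mult, Rinv_l, Rpower_1 in Hlt; lra.
  + rewrite rpow_nonpos_base, Rabs_R0; lra.
Qed.

Lemma cpt_rpow_ge0 x r : 0 <= r -> continuity_pt (fun t => rpow t r) x.
Proof.
intros [H|H]; [now apply cpt_rpow|subst].
apply continuity_pt_ext with (f := fun _ => 1); [intros; now rewrite rpow_0_r|apply cpt_const].
Qed.

Lemma cpt_shift_rpow u r x : 0 < r -> continuity_pt (fun s => rpow (s - u) r) x.
Proof.
intros. apply (continuity_pt_comp (fun s => s - u) (fun t => rpow t r)); [|now apply cpt_rpow].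
apply continuity_pt_minus; [apply continuity_pt_id|apply cpt_const].
Qed.

Lemma is_derive_val (f : R -> R) x (l l' : R) : is_derive f x l -> l = l' -> is_derive f x l'.
Proof. intros H E; subst; auto. Qed.

Lemma D_plus (f g : R -> R) x df dg : is_derive f x df -> is_derive g x dg ->
  is_derive (fun t => f t + g t) x (df + dg).
Proof. intros; apply (@is_derive_plus R_AbsRing R_NormedModule); auto. Qed.

Lemma D_minus (f g : R -> R) x df dg : is_derive f x df -> is_derive g x dg ->
  is_derive (fun t => f t - g t) x (df - dg).
Proof. intros; apply (@is_derive_minus R_AbsRing R_NormedModule); auto. Qed.

Lemma D_mult (f g : R -> R) x df dg : is_derive f x df -> is_derive g x dg ->
  is_derive (fun t => f t * g t) x (df * g x + f x * dg).
Proof. intros; apply (@is_derive_mult R_AbsRing); auto. intros; apply Rmult_comm. Qed.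

Lemma D_comp (f g : R -> R) x df dg : is_derive f (g x) df -> is_derive g x dg ->
  is_derive (fun t => f (g t)) x (df * dg).
Proof. intros. rewrite Rmult_comm. apply (@is_derive_comp R_AbsRing R_NormedModule); auto. Qed.

Lemma D_const (c : R) x : is_derive (fun _ => c) x 0.
Proof. apply (@is_derive_const R_AbsRing R_NormedModule). Qed.

Lemma D_id x : is_derive (fun t : R => t) x 1.
Proof. apply (@is_derive_id R_AbsRing). Qed.

Lemma D_ext (f g : R -> R) x l : (forall t, f t = g t) -> is_derive f x l -> is_derive g x l.
Proof. apply (@is_derive_ext R_AbsRing R_NormedModule). Qed.

Lemma D_exp (f : R -> R) x df : is_derive f x df -> is_derive (fun t => exp (f t)) x (exp (f x) * df).
Proof. intros. apply (D_comp exp f); auto. apply is_derive_Reals, derivable_pt_lim_exp. Qed.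

Lemma D_shift u y : is_derive (fun t => t - u) y 1.
Proof. eapply is_derive_val; [apply D_minus; [apply D_id|apply D_const]|ring]. Qed.

Lemma D_affine a b y : is_derive (fun t => (t - a) / b) y (/ b).
Proof.
apply (D_ext (fun t => / b * (t - a))); [intros t; unfold Rdiv; apply Rmult_comm|].
eapply is_derive_val; [apply is_derive_scal, D_shift|ring].
Qed.

Lemma D_scale (c : R) x : is_derive (fun t => c * t) x c.
Proof. eapply is_derive_val; [apply is_derive_scal, D_id|ring]. Qed.

Lemma D_rpow_base x r : 0 < x -> is_derive (fun t => rpow t r) x (r * Rpower x (r - 1)).
Proof.
intros Hx. apply is_derive_ext_loc with (fun t => Rpower t r).
- exists (mkposreal _ Hx). intros y Hy. assert (Hb : Rabs (y - x) < x) by apply Hy.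
  apply Rabs_def2 in Hb. rewrite rpow_Rpower; auto; lra.
- apply is_derive_Reals. apply derivable_pt_lim_power; auto.
Qed.

Lemma D_rpow (f : R -> R) x df r : is_derive f x df -> 0 < f x ->
  is_derive (fun t => rpow (f t) r) x (r * Rpower (f x) (r - 1) * df).
Proof. intros. apply (D_comp (fun t => rpow t r) f); auto. now apply D_rpow_base. Qed.

Lemma D_Rpower (f : R -> R) x df r : is_derive f x df -> 0 < f x ->
  is_derive (fun t => Rpower (f t) r) x (r * Rpower (f x) (r - 1) * df).
Proof.
intros. apply (D_comp (fun t => Rpower t r) f); auto.
apply is_derive_Reals. exact (derivable_pt_lim_power (f x) r H0).
Qed.

Lemma D_rpow_primitive r y : 0 < y -> 0 < r + 1 ->
  is_derive (fun t => rpow t (r + 1) / (r + 1)) y (rpow y r).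
Proof.
intros Hy Hr. eapply is_derive_val.
- apply (D_ext (fun t => / (r + 1) * rpow t (r + 1))); [intros; unfold Rdiv; ring|].
  apply is_derive_scal, D_rpow_base; lra.
- rewrite rpow_Rpower by lra. replace (r + 1 - 1) with r by ring. field; lra.
Qed.

Lemma cpt_of_derive (f : R -> R) x l : is_derive f x l -> continuity_pt f x.
Proof. intros H. apply derivable_continuous_pt. exists l. apply is_derive_Reals; auto. Qed.

(** * Riemann integrals of continuous functions
    [RInt] below is Coquelicot's integral, whose lemmas are first specialised to
    real-valued functions; [Defs.RInt] is the integral of the statement. *)

Lemma Defs_RInt_eq g c d : Riemann_integrable g c d -> Defs.RInt g c d = RInt g c d.
Proof.
intros pr. unfold Defs.RInt.
destruct (epsilon_spec (inhabits 0)
  (fun r => exists pr : Riemann_integrable g c d, RiemannInt pr = r)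
  (ex_intro _ (RiemannInt pr) (ex_intro _ pr eq_refl))) as [pr' H].
rewrite <- H. symmetry; apply RInt_Reals.
Qed.

Lemma RInt_uniq (g : R -> R) a b (l : R) : is_RInt g a b l -> RInt g a b = l.
Proof. apply (@is_RInt_unique R_CompleteNormedModule). Qed.

Lemma RInt_corr (g : R -> R) a b : ex_RInt g a b -> is_RInt g a b (RInt g a b).
Proof. apply (@RInt_correct R_CompleteNormedModule). Qed.

Lemma ex_RInt_cont (g : R -> R) a b :
  (forall z, Rmin a b <= z <= Rmax a b -> continuity_pt g z) -> ex_RInt g a b.
Proof. intros H. apply (@ex_RInt_continuous R_CompleteNormedModule). intros; now apply cont_of_cpt, H. Qed.

Lemma ex_RInt_glob (h : R -> R) a b : (forall y, continuity_pt h y) -> ex_RInt h a b.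
Proof. intros; apply ex_RInt_cont; auto. Qed.

Lemma RInt_point_R (h : R -> R) a : RInt h a a = 0.
Proof. apply (@RInt_point R_CompleteNormedModule). Qed.

Lemma RInt_ext_R (f g : R -> R) a b :
  (forall x, Rmin a b < x < Rmax a b -> f x = g x) -> RInt f a b = RInt g a b.
Proof. apply (@RInt_ext R_CompleteNormedModule). Qed.

Lemma RInt_Chasles_R (h : R -> R) a b c : ex_RInt h a b -> ex_RInt h b c ->
  RInt h a b + RInt h b c = RInt h a c.
Proof. intros. apply (@RInt_Chasles R_CompleteNormedModule); auto. Qed.

Lemma RInt_scal_R (f : R -> R) a b k : ex_RInt f a b ->
  RInt (fun s => k * f s) a b = k * RInt f a b.
Proof. intros Hf. exact (@RInt_scal R_CompleteNormedModule f a b k Hf). Qed.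

Lemma RInt_lin2 (f g : R -> R) a b k1 k2 : ex_RInt f a b -> ex_RInt g a b ->
  RInt (fun s => k1 * f s + k2 * g s) a b = k1 * RInt f a b + k2 * RInt g a b.
Proof.
intros Hf Hg. rewrite <- !RInt_scal_R by auto.
apply (@RInt_plus R_CompleteNormedModule (fun s => k1 * f s) (fun s => k2 * g s) a b);
  apply (@ex_RInt_scal R_CompleteNormedModule); auto.
Qed.

Lemma RInt_ge0 (h : R -> R) a b : a <= b -> ex_RInt h a b ->
  (forall x, a < x < b -> 0 <= h x) -> 0 <= RInt h a b.
Proof.
intros Hab Hex Hp. replace 0 with (RInt (fun _ => 0) a b).
- apply RInt_le; auto. apply ex_RInt_const.
- rewrite RInt_const. unfold scal; simpl; unfold mult; simpl; ring.
Qed.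

Lemma D_RInt (h : R -> R) a x : (forall y, continuity_pt h y) ->
  is_derive (fun t => RInt h a t) x (h x).
Proof.
intros Hc. apply (is_derive_RInt h (fun z => RInt h a z) a x).
- apply filter_forall. intros b0. apply RInt_corr, ex_RInt_glob; auto.
- apply cont_of_cpt; auto.
Qed.

Lemma D_RInt_loc (h : R -> R) a lo hi : (forall x, lo < x < hi -> continuity_pt h x) ->
  lo < a < hi -> forall y, lo < y < hi -> is_derive (fun z => RInt h a z) y (h y).
Proof.
intros Hc Ha y Hy. apply (is_derive_RInt h (fun z => RInt h a z) a y); [|apply cont_of_cpt; auto].
assert (He : 0 < Rmin (y - lo) (hi - y)) by (apply Rmin_pos; lra).
exists (mkposreal _ He). intros b0 Hb0.
assert (Hb : Rabs (b0 - y) < Rmin (y - lo) (hi - y)) by apply Hb0.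
apply Rabs_def2 in Hb. assert (Rmin (y - lo) (hi - y) <= y - lo) by apply Rmin_l.
assert (Rmin (y - lo) (hi - y) <= hi - y) by apply Rmin_r.
apply RInt_corr, ex_RInt_cont. intros z Hz. apply Hc. split.
- apply Rlt_le_trans with (Rmin a b0); [apply Rmin_case; lra|apply Hz].
- apply Rle_lt_trans with (Rmax a b0); [apply Hz|apply Rmax_case; lra].
Qed.

Lemma cpt_RInt (h : R -> R) a x : (forall y, continuity_pt h y) ->
  continuity_pt (fun z => RInt h a z) x.
Proof. intros. apply cpt_of_derive with (h x). apply D_RInt; auto. Qed.

Lemma RInt_antideriv (g Psi : R -> R) a b : a < b ->
  (forall x, continuity_pt g x) ->
  (forall y, a < y < b -> is_derive Psi y (g y)) ->
  continuity_pt Psi a -> continuity_pt Psi b ->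
  RInt g a b = Psi b - Psi a.
Proof.
intros Hab Hg Hd Ca Cb.
destruct (MVT_gen (fun y => Psi y - RInt g a y) a b (fun _ => 0)) as [c [_ Eq]].
- intros x Hx. rewrite Rmin_left, Rmax_right in Hx by lra. eapply is_derive_val.
  + apply D_minus; [apply Hd; lra|apply D_RInt; auto].
  + ring.
- intros x Hx. rewrite Rmin_left, Rmax_right in Hx by lra.
  apply continuity_pt_minus; [|now apply cpt_RInt].
  destruct (Req_dec x a); [now subst|]. destruct (Req_dec x b); [now subst|].
  apply cpt_of_derive with (g x). apply Hd; lra.
- rewrite RInt_point_R in Eq. lra.
Qed.

Lemma RInt_affine (k : R -> R) u v : u < v -> (forall x, continuity_pt k x) ->
  RInt (fun s => k ((s - u) / (v - u))) u v = (v - u) * RInt k 0 1.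
Proof.
intros Huv Hk.
assert (E := @RInt_comp_lin R_CompleteNormedModule k (/ (v - u)) (- u / (v - u)) u v).
replace (/ (v - u) * u + - u / (v - u)) with 0 in E by (field; lra).
replace (/ (v - u) * v + - u / (v - u)) with 1 in E by (field; lra).
rewrite <- E by (apply ex_RInt_glob; auto).
rewrite <- RInt_scal_R.
- apply RInt_ext_R. intros x _. unfold scal; simpl; unfold mult; simpl.
  replace (/ (v - u) * x + - u / (v - u)) with ((x - u) / (v - u)) by (field; lra). field; lra.
- apply (@ex_RInt_comp_lin R_CompleteNormedModule k).
  replace (/ (v - u) * u + - u / (v - u)) with 0 by (field; lra).
  replace (/ (v - u) * v + - u / (v - u)) with 1 by (field; lra). apply ex_RInt_glob; auto.
Qed.

Lemma abs_diff_le_RInt (Phi dPhi Y : R -> R) u v : u < v ->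
  (forall s, u < s < v -> is_derive Phi s (dPhi s)) ->
  (forall s, u <= s <= v -> continuity_pt Phi s) ->
  (forall s, u <= s <= v -> Rabs (dPhi s) <= Y s) ->
  (forall s, continuity_pt Y s) ->
  Rabs (Phi v - Phi u) <= RInt Y u v.
Proof.
intros Huv Hd Hc HY HYc.
set (H := fun t => RInt Y u t).
assert (HHd : forall t, is_derive H t (Y t)) by (intros; apply D_RInt; auto).
assert (HHu : H u = 0) by apply RInt_point_R.
assert (Hmvt : forall sg : R, exists c, u <= c <= v /\
          (Phi v + sg * H v) - (Phi u + sg * H u) = (dPhi c + sg * Y c) * (v - u)).
{ intros sg. destruct (MVT_gen (fun t => Phi t + sg * H t) u v (fun t => dPhi t + sg * Y t))
    as [c [Hcuv Eq]]; rewrite ?Rmin_left, ?Rmax_right in * by lra.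
  - intros x Hx. apply D_plus; [apply Hd; lra|apply is_derive_scal, HHd].
  - intros x Hx. apply continuity_pt_plus; [apply Hc; lra|].
    apply continuity_pt_mult; [apply cpt_const|apply cpt_of_derive with (Y x), HHd].
  - exists c; split; auto. }
destruct (Hmvt 1) as [c1 [Hc1 E1]]. destruct (Hmvt (-1)) as [c2 [Hc2 E2]].
assert (B1 := HY c1 Hc1). assert (B2 := HY c2 Hc2).
apply Rabs_le_between in B1. apply Rabs_le_between in B2.
assert (0 <= (dPhi c1 + 1 * Y c1) * (v - u)) by nra.
assert ((dPhi c2 + -1 * Y c2) * (v - u) <= 0) by nra.
apply Rabs_le. fold (H v). lra.
Qed.

(** * The improper integral [Integral] of the statement *)

Lemma imp_int_conv_unique g lo hi L1 L2 : lo < hi ->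
  imp_int_conv g lo hi L1 -> imp_int_conv g lo hi L2 -> L1 = L2.
Proof.
intros Hlh [_ H1] [_ H2].
destruct (Req_dec L1 L2) as [|Hne]; auto. exfalso.
assert (He : 0 < Rabs (L1 - L2) / 2) by (apply Rdiv_lt_0_compat; [apply Rabs_pos_lt; lra|lra]).
destruct (H1 _ He) as [d1 [Hd1 K1]]. destruct (H2 _ He) as [d2 [Hd2 K2]].
set (d := Rmin (Rmin d1 d2) (hi - lo)).
assert (Hd : 0 < d) by (unfold d; repeat apply Rmin_pos; lra).
assert (d <= Rmin d1 d2 /\ d <= hi - lo) as [Hd12 Hdh] by (split; [apply Rmin_l|apply Rmin_r]).
assert (Rmin d1 d2 <= d1) by apply Rmin_l. assert (Rmin d1 d2 <= d2) by apply Rmin_r.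
assert (A1 := K1 (lo + d/2) (hi - d/2) ltac:(lra) ltac:(lra) ltac:(lra)).
assert (A2 := K2 (lo + d/2) (hi - d/2) ltac:(lra) ltac:(lra) ltac:(lra)).
set (X := Defs.RInt g (lo + d/2) (hi - d/2)) in *.
assert (Rabs (L1 - L2) <= Rabs (X - L1) + Rabs (X - L2)).
{ replace (L1 - L2) with (-(X - L1) + (X - L2)) by ring.
  eapply Rle_trans; [apply Rabs_triang|rewrite Rabs_Ropp; lra]. }
lra.
Qed.

Lemma Integral_eq g lo hi L : lo < hi -> imp_int_conv g lo hi L -> Integral g lo hi = L.
Proof.
intros Hlh H. unfold Integral. destruct (Rlt_dec lo hi); [|lra].
apply imp_int_conv_unique with g lo hi; auto.
apply (epsilon_spec (inhabits 0) (fun L => imp_int_conv g lo hi L)). exists L; auto.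
Qed.

Lemma Integral_deg g lo : Integral g lo lo = 0.
Proof. unfold Integral. destruct (Rlt_dec lo lo); [lra|auto]. Qed.

Lemma Integral_antideriv g Psi lo hi : lo < hi ->
  (forall y, lo < y < hi -> is_derive Psi y (g y) /\ continuity_pt g y) ->
  continuity_pt Psi lo -> continuity_pt Psi hi ->
  Integral g lo hi = Psi hi - Psi lo.
Proof.
intros Hlh Hd Clo Chi.
assert (Hex : forall c d, lo < c -> c <= d -> d < hi -> ex_RInt g c d).
{ intros c d H1 H2 H3. apply ex_RInt_cont. intros z Hz.
  rewrite Rmin_left, Rmax_right in Hz by lra. apply Hd; lra. }
assert (Hv : forall c d, lo < c -> c <= d -> d < hi -> Defs.RInt g c d = Psi d - Psi c).
{ intros c d H1 H2 H3. rewrite Defs_RInt_eq by (apply ex_RInt_Reals_0; auto).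
  apply RInt_uniq, (is_RInt_derive Psi g c d);
    intros x Hx; rewrite Rmin_left, Rmax_right in Hx by lra.
  - apply Hd; lra.
  - apply cont_of_cpt, Hd; lra. }
apply Integral_eq; auto. split.
- intros c d H1 H2 H3. constructor. apply ex_RInt_Reals_0; auto.
- intros eps He.
  destruct (cpt_eps _ _ Clo (eps/2)) as [d1 [Hd1 K1]]; [lra|].
  destruct (cpt_eps _ _ Chi (eps/2)) as [d2 [Hd2 K2]]; [lra|].
  exists (Rmin d1 d2). split; [apply Rmin_pos; auto|].
  intros c d Hc Hd' Hcd. rewrite Hv by lra.
  assert (Rmin d1 d2 <= d1) by apply Rmin_l. assert (Rmin d1 d2 <= d2) by apply Rmin_r.
  assert (A1: Rabs (Psi c - Psi lo) < eps/2) by (apply K1; rewrite Rabs_pos_eq; lra).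
  assert (A2: Rabs (Psi d - Psi hi) < eps/2) by (apply K2; rewrite Rabs_left; lra).
  replace (Psi d - Psi c - (Psi hi - Psi lo)) with ((Psi d - Psi hi) - (Psi c - Psi lo)) by ring.
  eapply Rle_lt_trans; [apply Rabs_triang|rewrite Rabs_Ropp; lra].
Qed.

Lemma is_RInt_reflect (g : R -> R) a b (l : R) :
  is_RInt g (-b) (-a) l -> is_RInt (fun s => g (- s)) a b l.
Proof.
intros H. apply is_RInt_swap in H.
assert (H2 := is_RInt_comp_lin g (-1) 0 a b (opp l)).
replace (-1 * a + 0) with (-a) in H2 by ring. replace (-1 * b + 0) with (-b) in H2 by ring.
apply H2, is_RInt_opp in H. rewrite opp_opp in H. eapply is_RInt_ext; [|exact H].
intros x _. unfold scal, opp; simpl. unfold mult; simpl.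
replace (-1 * x + 0) with (-x) by ring. change (- (-1 * g (-x)) = g (-x)). ring.
Qed.

Lemma imp_int_conv_reflect g lo hi L : lo < hi ->
  imp_int_conv g lo hi L -> imp_int_conv (fun s => g (- s)) (-hi) (-lo) L.
Proof.
intros Hlh [H1 H2].
assert (Hrefl : forall c d, -hi < c -> c <= d -> d < -lo ->
  ex_RInt g (-d) (-c) /\ Defs.RInt (fun s => g (- s)) c d = Defs.RInt g (-d) (-c)).
{ intros c d Hc Hcd Hd. destruct (H1 (-d) (-c)) as [pr]; try lra.
  assert (Hx : ex_RInt g (-d) (-c)) by (apply ex_RInt_Reals_1; auto).
  assert (Hxr : ex_RInt (fun s => g (- s)) c d).
  { destruct Hx as [l Hl]. exists l. now apply is_RInt_reflect. }
  split; auto. rewrite !Defs_RInt_eq by (apply ex_RInt_Reals_0; auto).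
  apply RInt_uniq, is_RInt_reflect, RInt_corr; auto. }
split.
- intros c d Hc Hcd Hd. constructor. apply ex_RInt_Reals_0.
  destruct (proj1 (Hrefl c d Hc Hcd Hd)) as [l Hl]. exists l. now apply is_RInt_reflect.
- intros eps He. destruct (H2 eps He) as [del [Hdel K]]. exists del; split; auto.
  intros c d Hc Hd Hcd. rewrite (proj2 (Hrefl c d ltac:(lra) Hcd ltac:(lra))). apply K; lra.
Qed.

Lemma Integral_reflect g lo hi : lo < hi ->
  Integral g lo hi = Integral (fun s => g (- s)) (-hi) (-lo).
Proof.
intros Hlh. unfold Integral.
destruct (Rlt_dec lo hi); [|lra]. destruct (Rlt_dec (-hi) (-lo)); [|lra].
f_equal. apply functional_extensionality. intros L.
apply propositional_extensionality. split; [now apply imp_int_conv_reflect|].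
intros H. assert (H' := imp_int_conv_reflect (fun s => g (- s)) (-hi) (-lo) L ltac:(lra) H).
rewrite !Ropp_involutive in H'.
replace g with (fun s => g (- - s)) by (apply functional_extensionality; intros; now rewrite Ropp_involutive).
exact H'.
Qed.

(** * Primitives of the weighted integrand (s-u)^(th-1) F(s)
    For th < 1 the weight is singular at u.  Writing F(s) = F(u) + (F(s) - F(u)),
    the second part gives a continuous integrand when F is differentiable at u,
    so  F(u)/th (y-u)^th + int_u^y (s-u)^(th-1) (F(s) - F(u)) ds  is a primitive
    continuous up to u. *)

Definition weighted_increment (F : R -> R) (u th : R) : R -> R :=
  fun s => if Rlt_dec u s then rpow (s - u) (th - 1) * (F s - F u) else 0.

Definition weighted_primitive (F : R -> R) (u th : R) (y : R) : R :=
  F u / th * rpow (y - u) th + RInt (weighted_increment F u th) u y.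

(* Near u, |F(s) - F(u)| <= C (s-u), so the increment is O((s-u)^th). *)
Lemma weighted_increment_cont_base F dF u th : 0 < th -> derivable_pt_lim F u dF ->
  continuity_pt (weighted_increment F u th) u.
Proof.
intros Hth Hd eps He.
set (C := Rabs dF + 1).
assert (HC : 0 < C) by (unfold C; assert (0 <= Rabs dF) by apply Rabs_pos; lra).
destruct (Hd 1 ltac:(lra)) as [d1 Hd1].
assert (HK : 0 < eps / C) by (apply Rdiv_lt_0_compat; auto).
exists (Rmin d1 (Rpower (eps / C) (/ th))). split; [apply Rmin_pos; [apply cond_pos|apply Rpower_pos]|].
intros s [_ Hs]. simpl in *. unfold R_dist, Rdist in *.
unfold weighted_increment. destruct (Rlt_dec u u); [lra|]. rewrite Rminus_0_r.
destruct (Rlt_dec u s) as [Hus|Hus]; [|rewrite Rabs_R0; auto].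
assert (Hm1 : Rmin d1 (Rpower (eps / C) (/ th)) <= d1) by apply Rmin_l.
assert (Hm2 : Rmin d1 (Rpower (eps / C) (/ th)) <= Rpower (eps / C) (/ th)) by apply Rmin_r.
rewrite Rabs_pos_eq in Hs by lra.
specialize (Hd1 (s - u) ltac:(lra) ltac:(rewrite Rabs_pos_eq; lra)).
replace (u + (s - u)) with s in Hd1 by ring.
assert (B1 : Rabs (F s - F u) <= C * (s - u)).
{ assert (Rabs ((F s - F u) / (s - u)) < C).
  { replace ((F s - F u) / (s - u)) with (((F s - F u) / (s - u) - dF) + dF) by ring.
    eapply Rle_lt_trans; [apply Rabs_triang|unfold C; lra]. }
  unfold Rdiv in H. rewrite Rabs_mult, Rabs_inv, (Rabs_pos_eq (s - u)) in H by lra.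
  apply Rmult_lt_compat_r with (r := s - u) in H; [|lra].
  rewrite Rmult_assoc, Rinv_l, Rmult_1_r in H by lra. lra. }
rewrite rpow_Rpower by lra. rewrite Rabs_mult, Rabs_pos_eq by (left; apply Rpower_pos).
apply Rle_lt_trans with (Rpower (s - u) (th - 1) * (C * (s - u))).
{ apply Rmult_le_compat_l; auto. left; apply Rpower_pos. }
replace (Rpower (s - u) (th - 1) * (C * (s - u))) with (C * Rpower (s - u) th)
  by (rewrite (Rpower_pred (s - u) th) by lra; ring).
assert (Hlt : Rpower (s - u) th < Rpower (Rpower (eps / C) (/ th)) th) by (apply Rlt_Rpower_l; auto; lra).
rewrite Rpower_mult, Rinv_l, Rpower_1 in Hlt by lra.
apply Rmult_lt_compat_l with (r := C) in Hlt; auto.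
replace (C * (eps / C)) with eps in Hlt by (field; lra). lra.
Qed.

Section WeightedPrimitive.
Variables (F dF : R -> R) (u th lo hi : R).
Hypothesis Hth : 0 < th.
Hypothesis Hu : lo < u < hi.
Hypothesis HF : forall s, lo < s < hi -> derivable_pt_lim F s (dF s).

Lemma weighted_increment_cont s : lo < s < hi ->
  continuity_pt (weighted_increment F u th) s.
Proof.
intros Hs.
assert (HFc : continuity_pt F s) by (apply derivable_continuous_pt; exists (dF s); apply HF; auto).
destruct (Rlt_or_le u s) as [H|[H|H]].
- apply continuity_pt_locally_ext
    with (f := fun t => rpow (t - u) (th - 1) * (F t - F u)) (a := s - u); [lra| |].
  + intros y Hy. unfold Rdist in Hy. apply Rabs_def2 in Hy. unfold weighted_increment.
    destruct (Rlt_dec u y); [auto|lra].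
  + apply continuity_pt_mult; [|apply continuity_pt_minus; auto; apply cpt_const].
    apply (continuity_pt_comp (fun t => t - u) (fun t => rpow t (th - 1))).
    * apply continuity_pt_minus; [apply continuity_pt_id|apply cpt_const].
    * apply cpt_rpow_pos. lra.
- apply continuity_pt_locally_ext with (f := fun t => 0) (a := u - s); [lra| |apply cpt_const].
  intros y Hy. unfold Rdist in Hy. apply Rabs_def2 in Hy. unfold weighted_increment.
  destruct (Rlt_dec u y); [lra|auto].
- subst s. apply weighted_increment_cont_base with (dF u); auto.
Qed.

Lemma weighted_primitive_derive y : u < y < hi ->
  is_derive (weighted_primitive F u th) y (rpow (y - u) (th - 1) * F y).
Proof.
intros Hy. unfold weighted_primitive. eapply is_derive_val.
- apply D_plus.
  + apply is_derive_scal, D_rpow; [apply D_shift|lra].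
  + apply (D_RInt_loc _ u lo hi); auto; [intros; apply weighted_increment_cont; auto|lra].
- unfold weighted_increment. destruct (Rlt_dec u y); [|lra]. rewrite rpow_Rpower by lra. field; lra.
Qed.

Lemma weighted_primitive_cont y : lo < y < hi -> continuity_pt (weighted_primitive F u th) y.
Proof.
intros Hy. unfold weighted_primitive. apply continuity_pt_plus.
- apply continuity_pt_mult; [apply cpt_const|apply cpt_shift_rpow; auto].
- apply cpt_of_derive with (weighted_increment F u th y).
  apply (D_RInt_loc _ u lo hi); auto. intros; apply weighted_increment_cont; auto.
Qed.

Lemma weighted_primitive_base : weighted_primitive F u th u = 0.
Proof. unfold weighted_primitive. rewrite Rminus_eq_0, rpow_0_l, RInt_point_R by lra. ring. Qed.

Lemma Integral_weighted v : u < v < hi ->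
  Integral (fun s => rpow (s - u) (th - 1) * F s) u v = weighted_primitive F u th v.
Proof.
intros Hv. rewrite (Integral_antideriv _ (weighted_primitive F u th)).
- rewrite weighted_primitive_base; ring.
- lra.
- intros y Hy. split; [apply weighted_primitive_derive; lra|].
  apply continuity_pt_mult.
  + apply (continuity_pt_comp (fun s => s - u) (fun t => rpow t (th - 1))).
    * apply continuity_pt_minus; [apply continuity_pt_id|apply cpt_const].
    * apply cpt_rpow_pos. lra.
  + apply derivable_continuous_pt. exists (dF y). apply HF; lra.
- apply weighted_primitive_cont; lra.
- apply weighted_primitive_cont; lra.
Qed.

End WeightedPrimitive.

(** * The Gamma recursion Gamma(th+1) = th Gamma(th) *)

Lemma gamma_conv_unique th L1 L2 : gamma_conv th L1 -> gamma_conv th L2 -> L1 = L2.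
Proof.
intros [_ H1] [_ H2].
destruct (Req_dec L1 L2) as [|Hne]; auto. exfalso.
assert (He : 0 < Rabs (L1 - L2) / 2) by (apply Rdiv_lt_0_compat; [apply Rabs_pos_lt; lra|lra]).
destruct (H1 _ He) as [d1 [Hd1 [M1 K1]]]. destruct (H2 _ He) as [d2 [Hd2 [M2 K2]]].
set (c := Rmin d1 d2 / 2). set (d := Rmax (Rmax M1 M2) c + 1).
assert (Rmin d1 d2 <= d1) by apply Rmin_l. assert (Rmin d1 d2 <= d2) by apply Rmin_r.
assert (0 < Rmin d1 d2) by (apply Rmin_pos; auto).
assert (Rmax M1 M2 <= Rmax (Rmax M1 M2) c) by apply Rmax_l.
assert (c <= Rmax (Rmax M1 M2) c) by apply Rmax_r.
assert (M1 <= Rmax M1 M2) by apply Rmax_l. assert (M2 <= Rmax M1 M2) by apply Rmax_r.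
assert (A1 := K1 c d ltac:(unfold c; lra) ltac:(unfold d; lra) ltac:(unfold d; lra)).
assert (A2 := K2 c d ltac:(unfold c; lra) ltac:(unfold d; lra) ltac:(unfold d; lra)).
set (X := Defs.RInt _ c d) in *.
assert (Rabs (L1 - L2) <= Rabs (X - L1) + Rabs (X - L2)).
{ replace (L1 - L2) with (-(X - L1) + (X - L2)) by ring.
  eapply Rle_trans; [apply Rabs_triang|rewrite Rabs_Ropp; lra]. }
lra.
Qed.

Lemma Gamma_eq th L : gamma_conv th L -> Gamma th = L.
Proof.
intros H. unfold Gamma. apply gamma_conv_unique with th; auto.
apply (epsilon_spec (inhabits 0) (fun L => gamma_conv th L)). exists L; auto.
Qed.

Lemma D_exp_scaled (c : R) x : is_derive (fun t => exp (c * t)) x (c * exp (c * x)).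
Proof. eapply is_derive_val; [apply D_exp, D_scale|ring]. Qed.

Lemma D_exp_neg x : is_derive (fun t => exp (- t)) x (- exp (- x)).
Proof.
apply (D_ext (fun t => exp (-1 * t))); [intros; f_equal; ring|].
eapply is_derive_val; [apply D_exp_scaled|replace (-1 * x) with (- x) by ring; ring].
Qed.

Lemma cpt_exp_neg x : continuity_pt (fun t => exp (- t)) x.
Proof. apply cpt_of_derive with (- exp (- x)), D_exp_neg. Qed.

Lemma gamma_conv_of th (Psi : R -> R) L :
  (forall y, 0 < y -> is_derive Psi y (rpow y (th - 1) * exp (- y))) ->
  continuity_pt Psi 0 -> Psi 0 = 0 ->
  (forall eps, 0 < eps -> exists M, forall d, M < d -> Rabs (Psi d - L) < eps) ->
  gamma_conv th L.
Proof.
intros Hd Hc H0 Hlim.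
assert (Hgc : forall y, 0 < y -> continuity_pt (fun t => rpow t (th - 1) * exp (- t)) y).
{ intros y Hy. apply continuity_pt_mult; [apply cpt_rpow_pos; auto|apply cpt_exp_neg]. }
assert (Hex : forall c d, 0 < c -> c <= d -> ex_RInt (fun t => rpow t (th - 1) * exp (- t)) c d).
{ intros c d Hc' Hcd. apply ex_RInt_cont. intros z Hz.
  rewrite Rmin_left, Rmax_right in Hz by lra. apply Hgc; lra. }
split.
- intros c d Hc' Hcd. constructor. apply ex_RInt_Reals_0; auto.
- intros eps He. destruct (cpt_eps Psi 0 Hc (eps / 2)) as [del [Hdel Kd]]; [lra|].
  destruct (Hlim (eps / 2)) as [M HM]; [lra|].
  exists del. split; auto. exists M. intros c d Hc' Hd' Hcd.
  rewrite Defs_RInt_eq by (apply ex_RInt_Reals_0; apply Hex; lra).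
  replace (RInt (fun t => rpow t (th - 1) * exp (- t)) c d) with (Psi d - Psi c).
  2: { symmetry. apply RInt_uniq, (is_RInt_derive Psi);
       intros x Hx; rewrite Rmin_left, Rmax_right in Hx by lra.
       - apply Hd; lra.
       - apply cont_of_cpt, Hgc; lra. }
  assert (A1 := Kd c ltac:(rewrite Rminus_0_r, Rabs_pos_eq; lra)). rewrite H0, Rminus_0_r in A1.
  assert (A2 := HM d Hd').
  replace (Psi d - Psi c - L) with ((Psi d - L) - Psi c) by ring.
  eapply Rle_lt_trans; [apply Rabs_triang|rewrite Rabs_Ropp; lra].
Qed.

Lemma exp_le_mono x y : x <= y -> exp x <= exp y.
Proof. intros [H|H]; [left; apply exp_increasing; auto|subst; lra]. Qed.

Lemma Rpower_exp_bound y b : 1 <= y -> Rpower y b <= exp (2 * b * b) * exp (y / 2).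
Proof.
intros Hy. unfold Rpower. rewrite <- exp_plus. apply exp_le_mono.
set (s := sqrt y). assert (Hs : 0 < s) by (apply sqrt_lt_R0; lra).
assert (Hss : s * s = y) by (apply sqrt_sqrt; lra).
assert (Hl : ln y = 2 * ln s) by (rewrite <- Hss, ln_mult; auto; ring).
assert (Hls : ln s <= s - 1) by (assert (H1 := exp_ineq1_le (ln s)); rewrite exp_ln in H1; lra).
assert (Hl0 : 0 <= ln y) by (destruct Hy as [Hy|<-]; [rewrite <- ln_1; left; apply ln_increasing; lra|rewrite ln_1; lra]).
assert (b * ln y <= Rabs b * ln y) by (apply Rmult_le_compat_r; auto; apply Rle_abs).
assert (Rabs b * ln y <= Rabs b * (2 * s)) by (apply Rmult_le_compat_l; [apply Rabs_pos|lra]).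
assert (Rabs b * Rabs b = b * b) by (rewrite <- Rabs_mult; apply Rabs_pos_eq; nra).
assert (0 <= (2 * Rabs b - s) * (2 * Rabs b - s)) by apply Rle_0_sqr.
assert (2 * Rabs b * s <= 2 * b * b + y / 2) by (rewrite <- Hss; nra).
lra.
Qed.

Lemma pow_exp_le y b : 1 <= y -> rpow y b * exp (- y) <= exp (2 * b * b) * exp (- (y / 2)).
Proof.
intros Hy. rewrite rpow_Rpower by lra.
replace (exp (- (y / 2))) with (exp (y / 2) * exp (- y)) by (rewrite <- exp_plus; f_equal; field).
rewrite <- Rmult_assoc. apply Rmult_le_compat_r; [left; apply exp_pos|now apply Rpower_exp_bound].
Qed.

Lemma pow_exp_decay b eps : 0 < eps ->
  exists M, forall d, M < d -> rpow d b * exp (- d) < eps.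
Proof.
intros He. set (C := exp (2 * b * b)). assert (HC : 0 < C) by apply exp_pos.
exists (Rmax 1 (2 * C / eps)). intros d Hd.
assert (H1 : 1 <= d) by (assert (1 <= Rmax 1 (2 * C / eps)) by apply Rmax_l; lra).
assert (H2 : 2 * C / eps < d) by (assert (2 * C / eps <= Rmax 1 (2 * C / eps)) by apply Rmax_r; lra).
apply Rle_lt_trans with (C * exp (- (d / 2))); [apply pow_exp_le; auto|].
assert (Hx := exp_ineq1_le (d / 2)).
assert (Hinv : exp (- (d / 2)) * exp (d / 2) = 1) by (rewrite <- exp_plus, <- exp_0; f_equal; ring).
assert (2 * C < d * eps) by (apply Rmult_lt_compat_r with (r := eps) in H2; auto;
  unfold Rdiv in H2; rewrite Rmult_assoc, Rinv_l, Rmult_1_r in H2; lra).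
assert (0 < exp (- (d / 2))) by apply exp_pos. nra.
Qed.

Lemma nondecr_bounded_limit (Psi : R -> R) B :
  (forall a b, 1 <= a <= b -> Psi a <= Psi b) -> (forall y, 1 <= y -> Psi y <= B) ->
  exists L, (forall y, 1 <= y -> Psi y <= L) /\
    forall eps, 0 < eps -> exists M, forall d, M < d -> Rabs (Psi d - L) < eps.
Proof.
intros Hmono Hbdd.
set (E := fun r => exists y, 1 <= y /\ r = Psi y).
destruct (completeness E) as [L HL].
- exists B. intros r [y [Hy ->]]. auto.
- exists (Psi 1). exists 1. split; auto; lra.
- assert (HLub : forall y, 1 <= y -> Psi y <= L) by (intros y Hy; apply (proj1 HL); exists y; auto).
  exists L. split; auto. intros eps He.
  destruct (classic (exists y0, 1 <= y0 /\ L - eps < Psi y0)) as [[y0 [Hy0 Hy0']]|Hn].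
  + exists y0. intros d Hd. assert (Psi y0 <= Psi d) by (apply Hmono; lra).
    assert (Psi d <= L) by (apply HLub; lra). rewrite Rabs_left1 by lra. lra.
  + exfalso. assert (L <= L - eps); [|lra]. apply (proj2 HL). intros r [y [Hy ->]].
    destruct (Rle_or_lt (Psi y) (L - eps)); auto. exfalso; apply Hn; exists y; auto.
Qed.

Section GammaRecursion.
Variable th : R.
Hypothesis Hth : 0 < th.

Let Psi := weighted_primitive (fun s => exp (- s)) 0 th.

Lemma gamma_primitive_derive y : 0 < y -> is_derive Psi y (rpow y (th - 1) * exp (- y)).
Proof.
intros Hy. eapply is_derive_val.
- apply (weighted_primitive_derive _ (fun s => - exp (- s)) 0 th (-1) (y + 1)); auto; [lra| |lra].
  intros s _. apply is_derive_Reals, D_exp_neg.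
- now rewrite Rminus_0_r.
Qed.

Lemma gamma_primitive_cont y : continuity_pt Psi y.
Proof.
apply (weighted_primitive_cont _ (fun s => - exp (- s)) 0 th (Rmin y 0 - 1) (Rmax y 0 + 1)); auto.
- assert (Rmin y 0 <= 0) by apply Rmin_r. assert (0 <= Rmax y 0) by apply Rmax_r. lra.
- intros s _. apply is_derive_Reals, D_exp_neg.
- assert (Rmin y 0 <= y) by apply Rmin_l. assert (y <= Rmax y 0) by apply Rmax_l. lra.
Qed.

Lemma gamma_primitive_0 : Psi 0 = 0.
Proof. apply weighted_primitive_base; lra. Qed.

Lemma gamma_primitive_mono a b : 0 <= a <= b -> Psi a <= Psi b.
Proof.
intros Hab. destruct (Req_dec a b) as [->|Hne]; [lra|].
destruct (MVT_gen Psi a b (fun t => rpow t (th - 1) * exp (- t))) as [c [_ Eq]].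
- intros x Hx. rewrite Rmin_left, Rmax_right in Hx by lra. apply gamma_primitive_derive; lra.
- intros; apply gamma_primitive_cont.
- assert (0 <= rpow c (th - 1) * exp (- c)) by (apply Rmult_le_pos; [apply rpow_ge0|left; apply exp_pos]).
  nra.
Qed.

Lemma gamma_primitive_1_pos : 0 < Psi 1.
Proof.
destruct (MVT_gen Psi (1/2) 1 (fun t => rpow t (th - 1) * exp (- t))) as [c [Hc Eq]];
  rewrite ?Rmin_left, ?Rmax_right in * by lra.
- intros x Hx. apply gamma_primitive_derive; lra.
- intros; apply gamma_primitive_cont.
- assert (Psi 0 <= Psi (1/2)) by (apply gamma_primitive_mono; lra).
  rewrite gamma_primitive_0 in *. rewrite rpow_Rpower in Eq by lra.
  assert (0 < Rpower c (th - 1) * exp (- c)) by (apply Rmult_lt_0_compat; [apply Rpower_pos|apply exp_pos]).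
  nra.
Qed.

(* Psi + 2C e^(-t/2) is nonincreasing on [1,+oo), which bounds Psi. *)
Lemma gamma_primitive_bounded y : 1 <= y ->
  Psi y <= Psi 1 + 2 * exp (2 * (th - 1) * (th - 1)) * exp (- (1 / 2)).
Proof.
intros Hy. set (C := exp (2 * (th - 1) * (th - 1))).
destruct (Req_dec y 1) as [->|Hne]; [assert (0 < C * exp (- (1/2))) by
  (apply Rmult_lt_0_compat; apply exp_pos); lra|].
set (Z := fun t => Psi t + 2 * C * exp (- / 2 * t)).
destruct (MVT_gen Z 1 y (fun t => rpow t (th - 1) * exp (- t) - C * exp (- / 2 * t)))
  as [c [Hc Eq]]; rewrite ?Rmin_left, ?Rmax_right in * by lra.
- intros x Hx. unfold Z. eapply is_derive_val.
  + apply D_plus; [apply gamma_primitive_derive; lra|apply is_derive_scal, D_exp_scaled].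
  + field.
- intros x Hx. apply continuity_pt_plus; [apply gamma_primitive_cont|].
  apply cpt_of_derive with (2 * C * (- / 2 * exp (- / 2 * x))). apply is_derive_scal, D_exp_scaled.
- assert (Hb := pow_exp_le c (th - 1) ltac:(lra)). fold C in Hb.
  replace (- (c / 2)) with (- / 2 * c) in Hb by field.
  assert (Hneg : (rpow c (th - 1) * exp (- c) - C * exp (- / 2 * c)) * (y - 1) <= 0)
    by (apply Rmult_le_0_r; lra).
  unfold Z in Eq. replace (- (1/2)) with (- / 2 * 1) by field.
  assert (0 < C * exp (- / 2 * y)) by (apply Rmult_lt_0_compat; apply exp_pos). lra.
Qed.

Lemma Gamma_integrals : exists L, 0 < L /\ gamma_conv th L /\ gamma_conv (th + 1) (th * L).
Proof.
destruct (nondecr_bounded_limit Psi _ (fun a b H => gamma_primitive_mono a b ltac:(lra))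
  gamma_primitive_bounded) as [L [HLub Hlim]].
exists L. split; [|split].
- assert (Psi 1 <= L) by (apply HLub; lra). pose proof gamma_primitive_1_pos. lra.
- apply (gamma_conv_of th Psi); auto using gamma_primitive_derive, gamma_primitive_cont, gamma_primitive_0.
- (* integration by parts: th Psi(y) - y^th e^(-y) is a primitive of y^th e^(-y) *)
  set (Psi2 := fun y => th * Psi y - rpow y th * exp (- y)).
  apply (gamma_conv_of (th + 1) Psi2).
  + intros y Hy. unfold Psi2. eapply is_derive_val.
    * apply D_minus; [apply is_derive_scal, gamma_primitive_derive; auto|].
      apply D_mult; [apply D_rpow_base; auto|apply D_exp_neg].
    * rewrite !rpow_Rpower by auto. replace (th + 1 - 1) with th by ring.
      rewrite (Rpower_pred y th) by auto. ring.
  + unfold Psi2. apply continuity_pt_minus.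
    * apply continuity_pt_mult; [apply cpt_const|apply gamma_primitive_cont].
    * apply continuity_pt_mult; [apply cpt_rpow; auto|apply cpt_exp_neg].
  + unfold Psi2. rewrite gamma_primitive_0, rpow_0_l by lra. ring.
  + intros eps He. destruct (Hlim (eps / (2 * th))) as [M1 HM1]; [apply Rdiv_lt_0_compat; lra|].
    destruct (pow_exp_decay th (eps / 2)) as [M2 HM2]; [lra|].
    exists (Rmax M1 M2). intros d Hd.
    assert (M1 <= Rmax M1 M2) by apply Rmax_l. assert (M2 <= Rmax M1 M2) by apply Rmax_r.
    assert (A1 := HM1 d ltac:(lra)). assert (A2 := HM2 d ltac:(lra)).
    assert (A3 : Rabs (th * (Psi d - L)) < eps / 2).
    { rewrite Rabs_mult, Rabs_pos_eq by lra.
      apply Rmult_lt_compat_l with (r := th) in A1; auto.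
      replace (th * (eps / (2 * th))) with (eps / 2) in A1 by (field; lra). auto. }
    assert (0 <= rpow d th * exp (- d)) by (apply Rmult_le_pos; [apply rpow_ge0|left; apply exp_pos]).
    unfold Psi2. replace (th * Psi d - rpow d th * exp (- d) - th * L)
      with (th * (Psi d - L) - rpow d th * exp (- d)) by ring.
    eapply Rle_lt_trans; [apply Rabs_triang|].
    rewrite Rabs_Ropp, (Rabs_pos_eq (rpow d th * exp (- d))); lra.
Qed.

Lemma Gamma_pos : 0 < Gamma th.
Proof. destruct Gamma_integrals as [L [HL [G1 _]]]. now rewrite (Gamma_eq _ _ G1). Qed.

Lemma Gamma_succ : Gamma (th + 1) = th * Gamma th.
Proof. destruct Gamma_integrals as [L [_ [G1 G2]]]. now rewrite (Gamma_eq _ _ G1), (Gamma_eq _ _ G2). Qed.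

End GammaRecursion.

(** * Evaluation of A_4 as  int_0^1 |t^th - lam|^p dt *)

Lemma Integral_RInt g h lo hi : lo < hi -> (forall x, continuity_pt h x) ->
  (forall x, lo < x < hi -> g x = h x) -> Integral g lo hi = RInt h lo hi.
Proof.
intros Hlh Hh Hgh. rewrite (Integral_antideriv _ (fun y => RInt h lo y)); auto.
- rewrite RInt_point_R. ring.
- intros y Hy. split; [rewrite Hgh by auto; apply D_RInt; auto|].
  apply continuity_pt_locally_ext with (f := h) (a := Rmin (y - lo) (hi - y));
    [apply Rmin_pos; lra| |auto].
  intros z Hz. unfold Rdist in Hz. apply Rabs_def2 in Hz.
  assert (Rmin (y - lo) (hi - y) <= y - lo) by apply Rmin_l.
  assert (Rmin (y - lo) (hi - y) <= hi - y) by apply Rmin_r.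
  symmetry; apply Hgh; lra.
- apply cpt_RInt; auto.
- apply cpt_RInt; auto.
Qed.

Lemma RInt_rpow_0_1 r : 0 <= r -> RInt (fun t => rpow t r) 0 1 = / (r + 1) :> R.
Proof.
intros Hr. rewrite (RInt_antideriv _ (fun t => rpow t (r + 1) / (r + 1))).
- rewrite rpow_1_l, rpow_0_l by lra. field; lra.
- lra.
- intros; apply cpt_rpow_ge0; auto.
- intros y Hy. apply D_rpow_primitive; lra.
- unfold Rdiv. apply continuity_pt_mult; [apply cpt_rpow; lra|apply cpt_const].
- unfold Rdiv. apply continuity_pt_mult; [apply cpt_rpow; lra|apply cpt_const].
Qed.

(* The three kernels: |t^th - lam|^p (whose integral is A_4), (1 - t^th)^p
   (Beta functions after t = s^(1/th)), and the hypergeometric integrand written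
   so as to be continuous on all of R. *)
Definition kernel_A4 (th lam p : R) (t : R) : R := rpow (Rabs (rpow t th - lam)) p.
Definition kernel_beta (th p : R) (t : R) : R := rpow (1 - rpow t th) p.
Definition kernel_hyp (th lam p : R) (y : R) : R :=
  rpow y p * rpow (lam + (1 - lam) * Rabs (1 - y)) (- (/ th + p + 1)).

Lemma kernel_A4_cont th lam p x : 0 < th -> 0 < p -> continuity_pt (kernel_A4 th lam p) x.
Proof.
intros. unfold kernel_A4. apply (continuity_pt_comp (fun t => Rabs (rpow t th - lam)) (fun t => rpow t p));
  [|apply cpt_rpow; auto].
apply (continuity_pt_comp (fun t => rpow t th - lam) Rabs); [|apply Rcontinuity_abs].
apply continuity_pt_minus; [apply cpt_rpow; auto|apply cpt_const].
Qed.

Lemma kernel_beta_cont th p x : 0 < th -> 0 < p -> continuity_pt (kernel_beta th p) x.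
Proof.
intros. unfold kernel_beta. apply (continuity_pt_comp (fun x => 1 - rpow x th) (fun t => rpow t p));
  [|apply cpt_rpow; auto].
apply continuity_pt_minus; [apply cpt_const|apply cpt_rpow; auto].
Qed.

Lemma kernel_hyp_cont th lam p x : 0 < lam <= 1 -> 0 < p -> continuity_pt (kernel_hyp th lam p) x.
Proof.
intros Hl Hp. unfold kernel_hyp. apply continuity_pt_mult; [apply cpt_rpow; auto|].
apply (continuity_pt_comp (fun y => lam + (1 - lam) * Rabs (1 - y)) (fun t => rpow t (- (/ th + p + 1)))).
- apply continuity_pt_plus; [apply cpt_const|apply continuity_pt_mult; [apply cpt_const|]].
  apply (continuity_pt_comp (fun y => 1 - y) Rabs); [|apply Rcontinuity_abs].
  apply continuity_pt_minus; [apply cpt_const|apply continuity_pt_id].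
- apply cpt_rpow_pos. assert (0 <= Rabs (1 - x)) by apply Rabs_pos. nra.
Qed.

(* Beta(1/th, p+1) = th int_0^1 (1 - t^th)^p dt, via s = t^th. *)
Lemma Beta_inv_th th p : 0 < th -> 0 < p -> Beta (/ th) (p + 1) = th * RInt (kernel_beta th p) 0 1.
Proof.
intros Hth Hp. unfold Beta.
assert (Hc : forall x, continuity_pt (fun y => th * RInt (kernel_beta th p) 0 (rpow y (/ th))) x).
{ intros x. apply continuity_pt_mult; [apply cpt_const|].
  apply (continuity_pt_comp (fun y => rpow y (/ th)) (fun z => RInt (kernel_beta th p) 0 z)).
  - apply cpt_rpow, Rinv_0_lt_compat; auto.
  - apply cpt_RInt. intros; apply kernel_beta_cont; auto. }
rewrite (Integral_antideriv _ (fun y => th * RInt (kernel_beta th p) 0 (rpow y (/ th)))); auto; [|lra|].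
- rewrite rpow_1_l, rpow_0_l, RInt_point_R by (apply Rgt_not_eq, Rinv_0_lt_compat; auto). ring.
- intros y Hy. split.
  + eapply is_derive_val.
    * apply is_derive_scal, (D_comp (fun z => RInt (kernel_beta th p) 0 z) (fun y => rpow y (/ th))).
      -- apply D_RInt. intros; apply kernel_beta_cont; auto.
      -- apply D_rpow_base; lra.
    * unfold kernel_beta. rewrite (rpow_Rpower y) by lra. rewrite rpow_Rpower_inv by lra.
      replace (p + 1 - 1) with p by ring. rewrite !rpow_Rpower by lra. field; lra.
  + apply continuity_pt_mult; [apply cpt_rpow_pos; lra|].
    apply (continuity_pt_comp (fun t => 1 - t) (fun t => rpow t (p + 1 - 1))).
    * apply continuity_pt_minus; [apply cpt_const|apply continuity_pt_id].
    * apply cpt_rpow_pos; lra.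
Qed.

(* Beta(p+1, 1/th) = th int_0^1 (1 - t^th)^p dt, via s = 1 - t^th. *)
Lemma Beta_inv_th_swap th p : 0 < th -> 0 < p -> Beta (p + 1) (/ th) = th * RInt (kernel_beta th p) 0 1.
Proof.
intros Hth Hp. unfold Beta.
assert (Hc : forall x, continuity_pt (fun y => - th * RInt (kernel_beta th p) 0 (rpow (1 - y) (/ th))) x).
{ intros x. apply continuity_pt_mult; [apply cpt_const|].
  apply (continuity_pt_comp (fun y => rpow (1 - y) (/ th)) (fun z => RInt (kernel_beta th p) 0 z)).
  - apply (continuity_pt_comp (fun y => 1 - y) (fun t => rpow t (/ th))).
    + apply continuity_pt_minus; [apply cpt_const|apply continuity_pt_id].
    + apply cpt_rpow, Rinv_0_lt_compat; auto.
  - apply cpt_RInt. intros; apply kernel_beta_cont; auto. }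
rewrite (Integral_antideriv _ (fun y => - th * RInt (kernel_beta th p) 0 (rpow (1 - y) (/ th)))); auto; [|lra|].
- replace (1 - 1) with 0 by ring. replace (1 - 0) with 1 by ring.
  rewrite rpow_1_l, rpow_0_l, RInt_point_R by (apply Rgt_not_eq, Rinv_0_lt_compat; auto). ring.
- intros y Hy. split.
  + eapply is_derive_val.
    * apply is_derive_scal, (D_comp (fun z => RInt (kernel_beta th p) 0 z) (fun y => rpow (1 - y) (/ th))).
      -- apply D_RInt. intros; apply kernel_beta_cont; auto.
      -- apply D_rpow; [apply D_minus; [apply D_const|apply D_id]|lra].
    * unfold kernel_beta. rewrite (rpow_Rpower (1 - y)) by lra. rewrite rpow_Rpower_inv by lra.
      replace (p + 1 - 1) with p by ring. replace (1 - (1 - y)) with y by ring.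
      rewrite !rpow_Rpower by lra. field; lra.
  + apply continuity_pt_mult; [apply cpt_rpow_pos; lra|].
    apply (continuity_pt_comp (fun t => 1 - t) (fun t => rpow t (/ th - 1))).
    * apply continuity_pt_minus; [apply cpt_const|apply continuity_pt_id].
    * apply cpt_rpow_pos; lra.
Qed.

Lemma Beta_succ_1 p : 0 < p -> Beta (p + 1) 1 = / (p + 1).
Proof.
intros Hp. unfold Beta. rewrite <- RInt_rpow_0_1 by lra.
apply Integral_RInt; [lra|intros; apply cpt_rpow; lra|].
intros x _. replace (1 - 1) with 0 by ring. rewrite rpow_0_r, Rmult_1_r. f_equal; ring.
Qed.

Lemma hyp2F1_integral th lam p : 0 < th -> 0 < lam < 1 -> 0 < p ->
  Integral (fun t => rpow t (p + 1 - 1) * rpow (1 - t) (p + 2 - (p + 1) - 1) *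
                     rpow (1 - (1 - lam) * t) (- (/ th + p + 1))) 0 1
  = RInt (kernel_hyp th lam p) 0 1.
Proof.
intros Hth Hl Hp. apply Integral_RInt; [lra|intros; apply kernel_hyp_cont; auto; lra|].
intros y Hy. unfold kernel_hyp. replace (p + 1 - 1) with p by ring.
replace (p + 2 - (p + 1) - 1) with 0 by ring. rewrite rpow_0_r, Rabs_pos_eq by lra.
replace (lam + (1 - lam) * (1 - y)) with (1 - (1 - lam) * y) by ring. ring.
Qed.

Section KernelA4.
Variables th lam p : R.
Hypothesis Hth : 0 < th.
Hypothesis Hlam : 0 < lam < 1.
Hypothesis Hp : 0 < p.

(* Below the crossing point lam^(1/th): t = lam^(1/th) s. *)
Lemma kernel_A4_lower :
  RInt (kernel_A4 th lam p) 0 (Rpower lam (/ th))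
  = Rpower lam (/ th) * Rpower lam p * RInt (kernel_beta th p) 0 1.
Proof.
set (r := Rpower lam (/ th)).
assert (Hr : 0 < r) by apply Rpower_pos.
assert (Hrth : Rpower r th = lam) by (unfold r; rewrite Rpower_mult, Rinv_l, Rpower_1; lra).
assert (E := @RInt_comp_lin R_CompleteNormedModule (kernel_A4 th lam p) r 0 0 1).
replace (r * 0 + 0) with 0 in E by ring. replace (r * 1 + 0) with r in E by ring.
rewrite <- E by (apply ex_RInt_glob; intros; apply kernel_A4_cont; auto).
rewrite <- RInt_scal_R by (apply ex_RInt_glob; intros; apply kernel_beta_cont; auto).
apply RInt_ext_R. intros y Hy. rewrite Rmin_left, Rmax_right in Hy by lra.
unfold scal; simpl; unfold mult; simpl. rewrite Rmult_assoc. f_equal.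
unfold kernel_A4, kernel_beta. replace (r * y + 0) with (r * y) by ring.
rewrite (rpow_Rpower (r * y) th) by (apply Rmult_lt_0_compat; lra). rewrite (rpow_Rpower y th) by lra.
rewrite <- Rpower_mult_distr by lra. rewrite Hrth.
assert (HY := Rpower_lt_1 y th ltac:(lra) Hth).
assert (HY0 : 0 < Rpower y th) by apply Rpower_pos.
rewrite Rabs_left by nra.
replace (- (lam * Rpower y th - lam)) with (lam * (1 - Rpower y th)) by ring.
rewrite !rpow_Rpower by nra. rewrite <- Rpower_mult_distr by lra. reflexivity.
Qed.

(* The substitution t = (lam / (1 - (1-lam) y))^(1/th) used above the crossing point. *)
Let z := 1 - lam.
Let subst_map (y : R) : R := Rpower (lam / (1 - z * y)) (/ th).
Let subst_deriv (y : R) : R :=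
  / th * Rpower (lam / (1 - z * y)) (/ th - 1) * (lam * z / ((1 - z * y) * (1 - z * y))).

Lemma subst_denominator_pos y : y < / z -> 0 < 1 - z * y.
Proof.
intros Hy. assert (Hz : 0 < z) by (unfold z; lra).
apply Rmult_lt_compat_l with (r := z) in Hy; [|lra]. rewrite Rinv_r in Hy by lra. lra.
Qed.

Lemma subst_map_derive y : y < / z -> is_derive subst_map y (subst_deriv y) /\ continuity_pt subst_deriv y.
Proof.
intros Hy. assert (Hw := subst_denominator_pos y Hy). assert (Hz : 0 < z) by (unfold z; lra).
assert (Hc1 : continuity_pt (fun y => 1 - z * y) y).
{ apply continuity_pt_minus; [apply cpt_const|apply continuity_pt_mult; [apply cpt_const|apply continuity_pt_id]]. }
split.
- unfold subst_map, subst_deriv. eapply is_derive_val.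
  + apply D_Rpower; [|apply Rdiv_lt_0_compat; lra].
    apply (D_ext (fun y => lam * / (1 - z * y))); [intros; unfold Rdiv; ring|].
    apply is_derive_scal, is_derive_inv; [|lra].
    apply D_minus; [apply D_const|apply D_scale].
  + simpl. field. lra.
- unfold subst_deriv. apply continuity_pt_mult; [apply continuity_pt_mult; [apply cpt_const|]|].
  + apply (continuity_pt_comp (fun y => lam / (1 - z * y)) (fun t => Rpower t (/ th - 1))).
    * apply continuity_pt_div; [apply cpt_const|auto|lra].
    * apply cpt_Rpower, Rdiv_lt_0_compat; lra.
  + apply continuity_pt_div; [apply cpt_const|apply continuity_pt_mult; auto|nra].
Qed.

Lemma kernel_A4_subst_identity y : 0 < y < 1 ->
  subst_deriv y * kernel_A4 th lam p (subst_map y)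
  = Rpower lam (p + / th) / th * Rpower z (p + 1) * kernel_hyp th lam p y.
Proof.
intros Hy. assert (Hz : 0 < z < 1) by (unfold z; lra).
set (w := 1 - z * y). assert (Hwy : 0 < w) by (unfold w; nra).
assert (HgY : rpow (subst_map y) th = lam / w) by (apply rpow_Rpower_inv; auto; apply Rdiv_lt_0_compat; lra).
unfold kernel_A4. rewrite HgY.
assert (Hzy : z * y = 1 - w) by (unfold w; ring).
replace (lam / w - lam) with (lam * z * y / w) by (rewrite Rmult_assoc, Hzy; field; lra).
assert (Hpos : 0 < lam * z * y / w) by (apply Rdiv_lt_0_compat; [repeat apply Rmult_lt_0_compat|]; lra).
rewrite Rabs_pos_eq, rpow_Rpower by lra.
rewrite Rpower_div by (repeat apply Rmult_lt_0_compat; lra).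
rewrite <- !Rpower_mult_distr by (try apply Rmult_lt_0_compat; lra).
unfold subst_deriv. fold w. rewrite Rpower_div by lra.
unfold kernel_hyp. rewrite Rabs_pos_eq by lra.
replace (lam + (1 - lam) * (1 - y)) with w by (unfold w, z; ring).
rewrite !rpow_Rpower by lra.
assert (A1 : Rpower lam (p + / th) = Rpower lam p * Rpower lam (/ th - 1) * lam).
{ replace (p + / th) with (p + ((/ th - 1) + 1)) by ring. rewrite !Rpower_plus, Rpower_1 by lra. ring. }
assert (A2 : Rpower z (p + 1) = Rpower z p * z) by (rewrite Rpower_plus, Rpower_1 by lra; ring).
assert (A3 : Rpower w (- (/ th + p + 1)) = / (Rpower w (/ th - 1) * Rpower w p * (w * w))).
{ rewrite Rpower_Ropp. f_equal. replace (/ th + p + 1) with ((/ th - 1) + p + 1 + 1) by ring.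
  rewrite !Rpower_plus, Rpower_1 by lra. ring. }
rewrite A1, A2, A3.
assert (0 < Rpower w (/ th - 1)) by apply Rpower_pos. assert (0 < Rpower w p) by apply Rpower_pos.
field. repeat split; lra.
Qed.

(* Above the crossing point: the substitution maps [0,1] onto [lam^(1/th), 1]. *)
Lemma kernel_A4_upper :
  RInt (kernel_A4 th lam p) (Rpower lam (/ th)) 1
  = Rpower lam (p + / th) / th * Rpower z (p + 1) * RInt (kernel_hyp th lam p) 0 1.
Proof.
assert (Hzi : 1 < / z) by (rewrite <- Rinv_1; apply Rinv_lt_contravar; unfold z; lra).
assert (E := @RInt_comp R_CompleteNormedModule (kernel_A4 th lam p) subst_map subst_deriv 0 1).
rewrite Rmin_left, Rmax_right in E by lra.
assert (Hg0 : subst_map 0 = Rpower lam (/ th)) by (unfold subst_map; f_equal; field).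
assert (Hg1 : subst_map 1 = 1).
{ unfold subst_map. replace (lam / (1 - z * 1)) with 1 by (unfold z; field; lra). apply Rpower_1_l. }
rewrite Hg0, Hg1 in E. rewrite <- E.
- rewrite <- RInt_scal_R by (apply ex_RInt_glob; intros; apply kernel_hyp_cont; lra).
  apply RInt_ext_R. intros y Hy. rewrite Rmin_left, Rmax_right in Hy by lra.
  apply kernel_A4_subst_identity; auto.
- intros; apply cont_of_cpt, kernel_A4_cont; auto.
- intros x Hx. split; [|apply cont_of_cpt]; apply subst_map_derive; lra.
Qed.

End KernelA4.

(* The three cases of the definition of A_4: lam = 0, lam = 1 and 0 < lam < 1,
   the last by splitting [0,1] at the crossing point lam^(1/th). *)
Lemma RInt_kernel_A4 th lam p : 0 < th -> 0 <= lam <= 1 -> 0 < p ->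
  RInt (kernel_A4 th lam p) 0 1 = A4 th lam p :> R.
Proof.
intros Hth Hl Hp. unfold A4.
destruct (Req_EM_T lam 0) as [->|H0]; [|destruct (Req_EM_T lam 1) as [->|H1]].
- rewrite <- RInt_rpow_0_1 by nra. apply RInt_ext_R.
  intros x Hx. rewrite Rmin_left, Rmax_right in Hx by lra. unfold kernel_A4.
  rewrite Rminus_0_r, (rpow_Rpower x th), Rabs_pos_eq by (lra || (left; apply Rpower_pos)).
  rewrite !rpow_Rpower by (try apply Rpower_pos; lra). apply Rpower_mult.
- rewrite Beta_inv_th_swap by auto. rewrite <- Rmult_assoc, Rinv_l, Rmult_1_l by lra.
  apply RInt_ext_R. intros x Hx. rewrite Rmin_left, Rmax_right in Hx by lra.
  unfold kernel_A4, kernel_beta. rewrite (rpow_Rpower x th) by lra.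
  assert (Rpower x th < 1) by (apply Rpower_lt_1; lra).
  rewrite Rabs_left by lra. f_equal. ring.
- assert (Hl' : 0 < lam < 1) by lra.
  assert (Hr : 0 < Rpower lam (/ th) < 1) by (split; [apply Rpower_pos|apply Rpower_lt_1; auto; apply Rinv_0_lt_compat; auto]).
  rewrite <- (RInt_Chasles_R _ 0 (Rpower lam (/ th)) 1) by (apply ex_RInt_glob; intros; apply kernel_A4_cont; auto).
  rewrite kernel_A4_lower, kernel_A4_upper by auto.
  unfold hyp2F1. rewrite hyp2F1_integral by auto.
  replace (p + 2 - (p + 1)) with 1 by ring. rewrite Beta_inv_th, Beta_succ_1 by auto.
  rewrite !rpow_Rpower by lra.
  replace ((th * p + 1) / th) with (p + / th) by (field; lra).
  rewrite <- (Rpower_plus (/ th) p lam). replace (/ th + p) with (p + / th) by ring.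
  field. lra.
Qed.

(** * Young's inequality and its optimisation in the free parameter *)

(* Young's inequality a b <= a^p/p + b^q/q for conjugate exponents, from the
   convexity of exp. *)
Lemma young a b q : 0 <= a -> 0 <= b -> 1 < q ->
  a * b <= rpow a (q / (q - 1)) / (q / (q - 1)) + rpow b q / q.
Proof.
intros Ha Hb Hq. set (p := q / (q - 1)).
assert (Hp : 0 < p) by (unfold p; apply Rdiv_lt_0_compat; lra).
assert (Hpq : / p + / q = 1) by (unfold p; field; lra).
assert (R1 : 0 <= rpow a p / p) by (apply Rdiv_le_0_compat; [apply rpow_ge0|lra]).
assert (R2 : 0 <= rpow b q / q) by (apply Rdiv_le_0_compat; [apply rpow_ge0|lra]).
destruct Ha as [Ha|<-]; [|lra]. destruct Hb as [Hb|<-]; [|lra].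
rewrite !rpow_Rpower by auto. unfold Rpower.
(* convexity of exp: exp X >= exp M (1 + X - M), at M = ln a + ln b *)
set (M := ln a + ln b).
assert (Hconv : forall X, exp M * (1 + (X - M)) <= exp X).
{ intros X. replace (exp X) with (exp M * exp (X - M)) by (rewrite <- exp_plus; f_equal; ring).
  apply Rmult_le_compat_l; [left; apply exp_pos|apply exp_ineq1_le]. }
assert (E : a * b = exp M) by (unfold M; rewrite exp_plus, !exp_ln; auto).
rewrite E.
assert (K1 := Hconv (p * ln a)). assert (K2 := Hconv (q * ln b)).
assert (Hsplit : exp M = / p * (exp M * (1 + (p * ln a - M))) + / q * (exp M * (1 + (q * ln b - M)))).
{ replace (/ p * (exp M * (1 + (p * ln a - M))) + / q * (exp M * (1 + (q * ln b - M))))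
    with (exp M * ((/ p + / q) * (1 - M) + ln a + ln b)) by (field; lra).
  rewrite Hpq. unfold M. ring. }
rewrite Hsplit. unfold Rdiv. rewrite (Rmult_comm (exp (p * ln a))), (Rmult_comm (exp (q * ln b))).
apply Rplus_le_compat; apply Rmult_le_compat_l; auto; left; apply Rinv_0_lt_compat; lra.
Qed.

(* Young's inequality applied to (e a) (b / e). *)
Lemma young_param a b q e : 0 <= a -> 0 <= b -> 1 < q -> 0 < e ->
  a * b <= Rpower e (q / (q - 1)) * rpow a (q / (q - 1)) / (q / (q - 1)) + Rpower e (- q) * rpow b q / q.
Proof.
intros Ha Hb Hq He. set (p := q / (q - 1)).
assert (Hp : 0 < p) by (unfold p; apply Rdiv_lt_0_compat; lra).
replace (a * b) with ((e * a) * (b / e)) by (field; lra).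
eapply Rle_trans; [apply (young (e * a) (b / e) q); [nra|apply Rdiv_le_0_compat; lra|lra]|].
fold p. apply Rplus_le_compat; right.
- destruct Ha as [Ha|<-].
  + rewrite !rpow_Rpower by (try apply Rmult_lt_0_compat; auto). rewrite Rpower_mult_distr; auto.
  + rewrite Rmult_0_r, rpow_0_l by lra. field; lra.
- destruct Hb as [Hb|<-].
  + rewrite !rpow_Rpower by (try apply Rdiv_lt_0_compat; auto).
    unfold Rdiv. rewrite <- Rpower_mult_distr by (auto; apply Rinv_0_lt_compat; auto).
    unfold Rpower at 2 3. rewrite ln_Rinv by auto. replace (q * - ln e) with (- q * ln e) by ring. field; lra.
  + unfold Rdiv. rewrite Rmult_0_l, rpow_0_l by lra. field; lra.
Qed.

Lemma nonpos_of_le_all_multiples Z c : 0 <= c -> (forall k, 0 < k -> Z <= k * c) -> Z <= 0.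
Proof.
intros Hc H. destruct (Rle_or_lt Z 0) as [|HZ]; auto. exfalso.
assert (Hk := H (Z / (c + 1)) ltac:(apply Rdiv_lt_0_compat; lra)).
assert (Z / (c + 1) * c < Z); [|lra].
apply (Rmult_lt_reg_r (c + 1)); [lra|]. unfold Rdiv. field_simplify; [nra|lra].
Qed.

(* A bound by Young's inequality for every e > 0 yields the Hoelder-type bound:
   inf_e (e^p P/p + e^(-q) C/q) = P^(1/p) C^(1/q). *)
Lemma minimize_young_bound P C D X q : 1 < q -> 0 <= P -> 0 <= C -> 0 < D ->
  (forall e, 0 < e -> Rabs X <= D * (Rpower e (q / (q - 1)) * P / (q / (q - 1)) + Rpower e (- q) * C / q)) ->
  Rabs X <= D * rpow P (/ (q / (q - 1))) * rpow C (/ q).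
Proof.
intros Hq HP HC HD H. set (p := q / (q - 1)) in *.
assert (Hp : 1 < p) by (unfold p; apply (Rmult_lt_reg_r (q - 1)); [lra|];
  unfold Rdiv; rewrite Rmult_assoc, Rinv_l by lra; lra).
assert (Hpq : / p + / q = 1) by (unfold p; field; lra).
destruct HC as [HC|<-]; [destruct HP as [HP|<-]|].
- (* the optimal parameter e = (C/P)^(1/(pq)) *)
  set (e := Rpower (C / P) (/ (p * q))).
  specialize (H e (Rpower_pos _ _)).
  assert (E1 : Rpower e p * P = Rpower P (/ p) * Rpower C (/ q)).
  { unfold e. rewrite Rpower_mult. replace (/ (p * q) * p) with (/ q) by (field; lra).
    rewrite Rpower_div by auto.
    replace P with (Rpower P (/ p) * Rpower P (/ q)) at 2 by (rewrite <- Rpower_plus, Hpq; apply Rpower_1; auto).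
    assert (0 < Rpower P (/ q)) by apply Rpower_pos. field; lra. }
  assert (E2 : Rpower e (- q) * C = Rpower P (/ p) * Rpower C (/ q)).
  { unfold e. rewrite Rpower_mult. replace (/ (p * q) * - q) with (- / p) by (field; lra).
    rewrite Rpower_div by auto. rewrite !Rpower_Ropp.
    replace C with (Rpower C (/ p) * Rpower C (/ q)) at 2 by (rewrite <- Rpower_plus, Hpq; apply Rpower_1; auto).
    assert (0 < Rpower P (/ p)) by apply Rpower_pos. assert (0 < Rpower C (/ p)) by apply Rpower_pos.
    field; split; lra. }
  rewrite !rpow_Rpower by auto. unfold Rdiv in H. rewrite E1, E2 in H.
  replace (Rpower P (/ p) * Rpower C (/ q) * / p + Rpower P (/ p) * Rpower C (/ q) * / q)
    with (Rpower P (/ p) * Rpower C (/ q) * (/ p + / q)) in H by ring.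
  rewrite Hpq, Rmult_1_r in H. rewrite Rmult_assoc; auto.
- rewrite (rpow_0_l (/ p)) by (apply Rgt_not_eq, Rinv_0_lt_compat; lra). rewrite Rmult_0_r, Rmult_0_l.
  apply (nonpos_of_le_all_multiples _ (D * C / q)); [apply Rdiv_le_0_compat; nra|].
  intros k Hk. set (e := Rpower k (- / q)).
  assert (Hek : Rpower e (- q) = k)
    by (unfold e; rewrite Rpower_mult; replace (- / q * - q) with 1 by (field; lra); apply Rpower_1; auto).
  eapply Rle_trans; [apply (H e (Rpower_pos _ _))|]. rewrite Hek. right. field. lra.
- rewrite (rpow_0_l (/ q)) by (apply Rgt_not_eq, Rinv_0_lt_compat; lra). rewrite Rmult_0_r.
  apply (nonpos_of_le_all_multiples _ (D * P / p)); [apply Rdiv_le_0_compat; nra|].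
  intros k Hk. set (e := Rpower k (/ p)).
  assert (Hek : Rpower e p = k)
    by (unfold e; rewrite Rpower_mult; replace (/ p * p) with 1 by (field; lra); apply Rpower_1; auto).
  eapply Rle_trans; [apply (H e (Rpower_pos _ _))|]. rewrite Hek. right. field. lra.
Qed.

(** * The side estimate *)

(* T(F,u,v): the normalised one-sided part of S_f. *)
Definition side_term (F : R -> R) (u v th lam : R) : R :=
  (1 - lam) * F v + lam * F u
  - th / rpow (v - u) th * Integral (fun s => rpow (s - u) (th - 1) * F s) u v.

(* The weight w(s) = ((s-u)/(v-u))^th - lam, for which T = [w F - th/(v-u)^th Psi]_u^v. *)
Definition side_weight (u v th lam : R) (s : R) : R := rpow ((s - u) / (v - u)) th - lam.

Lemma side_weight_cont u v th lam s : 0 < th -> continuity_pt (side_weight u v th lam) s.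
Proof.
intros Hth. unfold side_weight. apply continuity_pt_minus; [|apply cpt_const].
apply (continuity_pt_comp (fun s => (s - u) / (v - u)) (fun t => rpow t th)); [|apply cpt_rpow; auto].
apply cpt_of_derive with (/ (v - u)). apply D_affine.
Qed.

Lemma side_weight_derive u v th lam t : u < v -> u < t ->
  is_derive (side_weight u v th lam) t (th / Rpower (v - u) th * Rpower (t - u) (th - 1)).
Proof.
intros Huv Ht. unfold side_weight. eapply is_derive_val.
- apply D_minus; [apply D_rpow; [apply D_affine|apply Rdiv_lt_0_compat; lra]|apply D_const].
- cbv beta. rewrite Rpower_div by lra. rewrite (Rpower_pred (v - u) th) by lra.
  assert (0 < Rpower (v - u) (th - 1)) by apply Rpower_pos. field. split; lra.
Qed.

(* |T| <= int_u^v |w| |F'|, estimated pointwise by Young's inequality with parameter e. *)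
Lemma side_term_young u v th lam q e (F dF G : R -> R) del :
  u < v -> 0 < th -> 1 < q -> 0 < e -> 0 < del ->
  (forall s, u - del < s < v + del -> derivable_pt_lim F s (dF s)) ->
  (forall s, u <= s <= v -> rpow (Rabs (dF s)) q <= G s) ->
  (forall s, continuity_pt G s) ->
  Rabs (side_term F u v th lam)
  <= Rpower e (q / (q - 1)) * RInt (fun s => rpow (Rabs (side_weight u v th lam s)) (q / (q - 1))) u v / (q / (q - 1))
     + Rpower e (- q) * RInt G u v / q.
Proof.
intros Huv Hth Hq He Hdel HF HG HGc.
set (p := q / (q - 1)). assert (Hp : 0 < p) by (unfold p; apply Rdiv_lt_0_compat; lra).
set (w := side_weight u v th lam). set (K := th / Rpower (v - u) th).
set (Psi := weighted_primitive F u th).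
set (W := fun s => rpow (Rabs (w s)) p).
set (Y := fun s => Rpower e p / p * W s + Rpower e (- q) / q * G s).
assert (HFc : forall s, u - del < s < v + del -> continuity_pt F s)
  by (intros s Hs; apply derivable_continuous_pt; exists (dF s); apply HF; auto).
assert (HWc : forall s, continuity_pt W s).
{ intros s. apply (continuity_pt_comp (fun s => Rabs (w s)) (fun t => rpow t p)); [|apply cpt_rpow; auto].
  apply (continuity_pt_comp w Rabs); [apply side_weight_cont; auto|apply Rcontinuity_abs]. }
assert (HYc : forall s, continuity_pt Y s).
{ intros s. apply continuity_pt_plus; apply continuity_pt_mult; auto; apply cpt_const. }
assert (HT : side_term F u v th lam = (w v * F v - K * Psi v) - (w u * F u - K * Psi u)).
{ unfold side_term, w, side_weight, K, Psi.
  rewrite (Integral_weighted F dF u th (u - del) (v + del)), weighted_primitive_base by (auto; lra).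
  replace ((v - u) / (v - u)) with 1 by (field; lra). replace ((u - u) / (v - u)) with 0 by (field; lra).
  rewrite rpow_1_l, rpow_0_l, rpow_Rpower by lra. ring. }
rewrite HT.
eapply Rle_trans.
- apply (abs_diff_le_RInt (fun t => w t * F t - K * Psi t) (fun t => w t * dF t) Y); auto.
  + intros t Ht. eapply is_derive_val.
    * apply D_minus; [apply D_mult; [apply side_weight_derive; lra|apply is_derive_Reals, HF; lra]|].
      apply is_derive_scal, (weighted_primitive_derive F dF u th (u - del) (v + del)); auto; lra.
    * rewrite rpow_Rpower by lra. fold K. ring.
  + intros t Ht. apply continuity_pt_minus.
    * apply continuity_pt_mult; [apply side_weight_cont; auto|apply HFc; lra].
    * apply continuity_pt_mult; [apply cpt_const|].
      apply (weighted_primitive_cont F dF u th (u - del) (v + del)); auto; lra.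
  + intros s Hs. rewrite Rabs_mult.
    eapply Rle_trans; [apply (young_param (Rabs (w s)) (Rabs (dF s)) q e); auto; apply Rabs_pos|].
    unfold Y, W. fold p. unfold Rdiv. rewrite !(Rmult_comm _ (/ _)), <- !Rmult_assoc.
    apply Rplus_le_compat_l, Rmult_le_compat_l; [|apply HG; auto].
    left; apply Rmult_lt_0_compat; [apply Rinv_0_lt_compat; lra|apply Rpower_pos].
- right. unfold Y. rewrite RInt_lin2 by (apply ex_RInt_glob; auto). unfold W, w. unfold Rdiv; ring.
Qed.

Lemma RInt_convex_interpolant alpha m A B : 0 <= alpha ->
  RInt (fun t => rpow t alpha * A + m * (1 - rpow t alpha) * B) 0 1 = (A + alpha * m * B) / (alpha + 1) :> R.
Proof.
intros Hal.
rewrite (RInt_ext_R _ (fun t => (A - m * B) * rpow t alpha + m * B * rpow t 0))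
  by (intros; rewrite rpow_0_r; ring).
rewrite RInt_lin2 by (apply ex_RInt_glob; intros; apply cpt_rpow_ge0; lra).
rewrite !RInt_rpow_0_1 by lra. field. lra.
Qed.

Lemma side_term_bound u v th lam q alpha m A B (F dF : R -> R) del :
  u < v -> 0 < th -> 0 <= lam <= 1 -> 1 < q -> 0 <= alpha -> 0 < m -> 0 <= A -> 0 <= B -> 0 < del ->
  (forall s, u - del < s < v + del -> derivable_pt_lim F s (dF s)) ->
  (forall s, u <= s <= v -> rpow (Rabs (dF s)) q <=
      rpow ((s - u) / (v - u)) alpha * A + m * (1 - rpow ((s - u) / (v - u)) alpha) * B) ->
  Rabs (side_term F u v th lam)
  <= (v - u) * rpow (A4 th lam (q / (q - 1))) (/ (q / (q - 1))) * rpow ((A + alpha * m * B) / (alpha + 1)) (/ q).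
Proof.
intros Huv Hth Hlam Hq Hal Hm HA HB Hdel HF HG.
set (p := q / (q - 1)). assert (Hp : 0 < p) by (unfold p; apply Rdiv_lt_0_compat; lra).
set (gfun := fun t => rpow t alpha * A + m * (1 - rpow t alpha) * B).
assert (Hgc : forall x, continuity_pt gfun x).
{ intros x. unfold gfun. assert (Hc := cpt_rpow_ge0 x alpha Hal).
  apply continuity_pt_plus; repeat apply continuity_pt_mult; auto; try apply cpt_const.
  apply continuity_pt_minus; auto; apply cpt_const. }
assert (HA4 : 0 <= A4 th lam p).
{ rewrite <- RInt_kernel_A4 by lra. apply RInt_ge0; [lra|apply ex_RInt_glob; intros; apply kernel_A4_cont; lra|].
  intros; apply rpow_ge0. }
apply minimize_young_bound; [lra|exact HA4| |lra|].
{ apply Rdiv_le_0_compat; [assert (0 <= alpha * m * B) by (repeat apply Rmult_le_pos; lra); lra|lra]. }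
intros e He. eapply Rle_trans.
- apply (side_term_young u v th lam q e F dF (fun s => gfun ((s - u) / (v - u))) del); auto.
  intros s. apply (continuity_pt_comp (fun s => (s - u) / (v - u)) gfun); auto.
  apply cpt_of_derive with (/ (v - u)), D_affine.
- fold p. unfold side_weight.
  change (fun s => rpow (Rabs (rpow ((s - u) / (v - u)) th - lam)) p)
    with (fun s => kernel_A4 th lam p ((s - u) / (v - u))).
  rewrite (RInt_affine (kernel_A4 th lam p)) by (auto; intros; apply kernel_A4_cont; lra).
  rewrite (RInt_affine gfun), RInt_kernel_A4 by (auto; lra).
  unfold gfun. rewrite RInt_convex_interpolant by lra.
  right. unfold Rdiv. ring.
Qed.

Lemma interval_interior_nbhd I c d : is_interval I -> c <= d -> interior I c -> interior I d ->
  exists del, 0 < del /\ forall s, c - del < s < d + del -> interior I s.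
Proof.
intros HI Hcd [d1 Hd1] [d2 Hd2]. unfold included, disc in Hd1, Hd2.
assert (Hd1p := cond_pos d1). assert (Hd2p := cond_pos d2).
assert (HIc : I c) by (apply Hd1; rewrite Rminus_eq_0, Rabs_R0; auto).
assert (HId : I d) by (apply Hd2; rewrite Rminus_eq_0, Rabs_R0; auto).
assert (HIr : forall y, c - d1 < y < d + d2 -> I y).
{ intros y Hy. destruct (Rle_or_lt y c); [apply Hd1; rewrite Rabs_left1; lra|].
  destruct (Rle_or_lt d y); [apply Hd2; rewrite Rabs_pos_eq; lra|].
  apply (HI c y d); auto; lra. }
exists (Rmin d1 d2). split; [apply Rmin_pos; auto|].
intros s Hs. assert (Rmin d1 d2 <= d1) by apply Rmin_l. assert (Rmin d1 d2 <= d2) by apply Rmin_r.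
assert (Hr : 0 < Rmin (s - (c - d1)) (d + d2 - s)) by (apply Rmin_pos; lra).
exists (mkposreal _ Hr). intros z Hz. unfold disc in Hz. simpl in Hz. apply Rabs_def2 in Hz.
assert (Rmin (s - (c - d1)) (d + d2 - s) <= s - (c - d1)) by apply Rmin_l.
assert (Rmin (s - (c - d1)) (d + d2 - s) <= d + d2 - s) by apply Rmin_r.
apply HIr; lra.
Qed.

(* (alpha,m)-convexity bounds g at any point s between m Y and X by the
   interpolation with parameter t = (s - mY)/(X - mY). *)
Lemma alpha_m_convex_between alpha m K (g : R -> R) X Y s :
  alpha_m_convex alpha m K g -> K X -> K Y -> K s -> m * Y <> X ->
  (m * Y <= s <= X \/ X <= s <= m * Y) ->
  g s <= rpow ((s - m * Y) / (X - m * Y)) alpha * g X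
         + m * (1 - rpow ((s - m * Y) / (X - m * Y)) alpha) * g Y.
Proof.
intros Hconv HX HY Hs Hne Hbetween. set (t := (s - m * Y) / (X - m * Y)).
assert (Ht : 0 <= t <= 1).
{ unfold t. destruct Hbetween as [Hb|Hb]; [assert (HD : 0 < X - m * Y) by lra|assert (HD : X - m * Y < 0) by lra];
  split; unfold Rdiv.
  - apply Rmult_le_pos; [lra|left; apply Rinv_0_lt_compat; lra].
  - apply (Rmult_le_reg_r (X - m * Y)); [lra|]. rewrite Rmult_assoc, Rinv_l, Rmult_1_r by lra. lra.
  - replace ((s - m * Y) * / (X - m * Y)) with ((m * Y - s) * / (m * Y - X)) by (field; lra).
    apply Rmult_le_pos; [lra|left; apply Rinv_0_lt_compat; lra].
  - replace ((s - m * Y) * / (X - m * Y)) with ((m * Y - s) * / (m * Y - X)) by (field; lra).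
    apply (Rmult_le_reg_r (m * Y - X)); [lra|]. rewrite Rmult_assoc, Rinv_l, Rmult_1_r by lra. lra. }
assert (Hpt : t * X + m * (1 - t) * Y = s) by (unfold t; field; lra).
assert (HC := Hconv X Y t HX HY Ht ltac:(rewrite Hpt; auto)). rewrite Hpt in HC. exact HC.
Qed.

Lemma Integral_right_reflect (f : R -> R) th c d : c <= d ->
  Integral (fun s => rpow (d - s) (th - 1) * f s) c d
  = Integral (fun s => rpow (s - - d) (th - 1) * f (- s)) (- d) (- c).
Proof.
intros [Hcd|<-]; [|now rewrite !Integral_deg].
rewrite Integral_reflect by auto. f_equal.
apply functional_extensionality. intros s. f_equal. f_equal. ring.
Qed.

Lemma side_term_scaled F u v d m L th lam : 0 < m -> 0 < L -> 0 <= d -> 0 < th -> v - u = m * d ->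
  rpow m (th - 1) * rpow d th / L * side_term F u v th lam
  = rpow m (th - 1) * rpow d th / L * ((1 - lam) * F v + lam * F u)
    - th / (m * L) * Integral (fun s => rpow (s - u) (th - 1) * F s) u v.
Proof.
intros Hm HL Hd Hth Hvu. unfold side_term.
destruct Hd as [Hd|<-].
- rewrite Hvu, !rpow_Rpower by nra. rewrite <- Rpower_mult_distr, (Rpower_pred m th) by lra.
  assert (0 < Rpower m (th - 1)) by apply Rpower_pos. assert (0 < Rpower d th) by apply Rpower_pos.
  field. repeat split; lra.
- replace v with u by lra. rewrite Integral_deg, rpow_0_l by lra. unfold Rdiv. ring.
Qed.

Lemma S_f_split f m x lam th a b : 0 < m -> a < b -> a <= x <= b -> 0 < th ->
  Gamma (th + 1) = th * Gamma th -> Gamma th <> 0 ->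
  S_f f m x lam th a b
  = rpow m (th - 1) * rpow (x - a) th / (b - a) * side_term f (m * a) (m * x) th lam
    + rpow m (th - 1) * rpow (b - x) th / (b - a)
      * side_term (fun s => f (- s)) (- (m * b)) (- (m * x)) th lam.
Proof.
intros Hm Hab Hx Hth HG HG0.
rewrite !side_term_scaled by (lra || ring).
rewrite <- (Integral_right_reflect f th (m * x) (m * b)) by nra.
unfold S_f, RL_left, RL_right. rewrite HG, !Ropp_involutive. field. repeat split; lra.
Qed.

Lemma scaled_side_bound T m d L th RA Cq : 0 < m -> 0 < L -> 0 <= d -> 0 < th -> 0 <= RA -> 0 <= Cq ->
  (0 < d -> Rabs T <= m * d * RA * Cq) ->
  Rabs (rpow m (th - 1) * rpow d th / L * T) <= rpow m th * RA / L * (rpow d (th + 1) * Cq).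
Proof.
intros Hm HL Hd Hth HRA HCq HT.
assert (Hrhs : 0 <= rpow m th * RA / L * (rpow d (th + 1) * Cq)).
{ apply Rmult_le_pos; [apply Rdiv_le_0_compat; [apply Rmult_le_pos; [apply rpow_ge0|auto]|lra]|].
  apply Rmult_le_pos; [apply rpow_ge0|auto]. }
destruct Hd as [Hd|<-].
2: { replace (rpow m (th - 1) * rpow 0 th / L * T) with 0 by (rewrite rpow_0_l by lra; unfold Rdiv; ring).
     now rewrite Rabs_R0. }
assert (Hc : 0 <= rpow m (th - 1) * rpow d th / L)
  by (apply Rdiv_le_0_compat; [apply Rmult_le_pos; apply rpow_ge0|lra]).
rewrite Rabs_mult, (Rabs_pos_eq _ Hc).
eapply Rle_trans; [apply Rmult_le_compat_l; [exact Hc|apply HT; auto]|].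
right. rewrite !rpow_Rpower by lra. rewrite (Rpower_pred m th), (Rpower_pred d (th + 1)) by lra.
replace (th + 1 - 1) with th by ring. field. lra.
Qed.

Section SideBounds.
Variables (q : R) (f f' : R -> R) (m alpha a b del x th lam : R).
Hypothesis Hq : 1 < q.
Hypothesis Hm : 0 < m <= 1.
Hypothesis Hal : 0 <= alpha <= 1.
Hypothesis Ha : 0 <= a < b.
Hypothesis Hx : a <= x <= b.
Hypothesis Hth : 0 < th.
Hypothesis Hlam : 0 <= lam <= 1.
Hypothesis Hdel : 0 < del.
Hypothesis Hder : forall s, m * a - del < s < b + del -> derivable_pt_lim f s (f' s).
Hypothesis Hconv :
  alpha_m_convex alpha m (fun y => m * a <= y <= b) (fun y => rpow (Rabs (f' y)) q).

Let RA := rpow (A4 th lam (q / (q - 1))) (/ (q / (q - 1))).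

Lemma left_side_bound : 0 < x - a ->
  Rabs (side_term f (m * a) (m * x) th lam)
  <= m * (x - a) * RA
     * rpow ((rpow (Rabs (f' (m * x))) q + alpha * m * rpow (Rabs (f' a)) q) / (alpha + 1)) (/ q).
Proof.
intros Hxa. replace (m * (x - a)) with (m * x - m * a) by ring.
apply (side_term_bound _ _ _ _ _ _ _ _ _ f f' del); try apply rpow_ge0; try nra.
- intros s Hs. apply Hder. nra.
- intros s Hs.
  apply (alpha_m_convex_between _ _ _ (fun y => rpow (Rabs (f' y)) q) (m * x) a s Hconv); nra.
Qed.

Lemma right_side_bound : 0 < b - x ->
  Rabs (side_term (fun s => f (- s)) (- (m * b)) (- (m * x)) th lam)
  <= m * (b - x) * RA
     * rpow ((rpow (Rabs (f' (m * x))) q + alpha * m * rpow (Rabs (f' b)) q) / (alpha + 1)) (/ q).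
Proof.
intros Hbx. replace (m * (b - x)) with (- (m * x) - - (m * b)) by ring.
apply (side_term_bound _ _ _ _ _ _ _ _ _ (fun s => f (- s)) (fun s => - f' (- s)) del);
  try apply rpow_ge0; try nra.
- intros s Hs. apply is_derive_Reals. eapply is_derive_val.
  + apply (D_comp f (fun s => - s)); [apply is_derive_Reals, Hder; nra|].
    apply (D_ext (fun s => -1 * s)); [intros; ring|apply D_scale].
  + ring.
- intros s Hs. rewrite Rabs_Ropp.
  replace ((s - - (m * b)) / (- (m * x) - - (m * b))) with ((- s - m * b) / (m * x - m * b)) by (field; nra).
  apply (alpha_m_convex_between _ _ _ (fun y => rpow (Rabs (f' y)) q) (m * x) b (- s) Hconv); nra.
Qed.

End SideBounds.

Theorem theorem2p4 :
  forall (q : R), 1 < q ->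
  let p := q / (q - 1) in
  forall (I : R -> Prop) (f f' : R -> R) (m alpha a b : R),
    is_interval I ->
    (forall x, I x -> 0 <= x) ->
    (forall x, interior I x -> derivable_pt_lim f x (f' x)) ->
    0 < m <= 1 ->
    0 <= alpha <= 1 ->
    a < b ->
    interior I (m * a) -> interior I b ->
    alpha_m_convex alpha m (fun y => m * a <= y <= b) (fun y => rpow (Rabs (f' y)) q) ->
  forall (x lam th : R),
    a <= x <= b -> 0 <= lam <= 1 -> 0 < th ->
    Rabs (S_f f m x lam th a b) <=
      rpow m th * rpow (A4 th lam p) (/ p) / (b - a) *
      ( rpow (x - a) (th + 1) *
          rpow ((rpow (Rabs (f' (m * x))) q + alpha * m * rpow (Rabs (f' a)) q) / (alpha + 1)) (/ q)
      + rpow (b - x) (th + 1) *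
          rpow ((rpow (Rabs (f' (m * x))) q + alpha * m * rpow (Rabs (f' b)) q) / (alpha + 1)) (/ q)).
Proof.
intros q Hq p I f f' m alpha a b HI Hnn Hder Hm Hal Hab Hia Hib Hconv x lam th Hx Hlam Hth.
assert (Ha0 : 0 <= a).
{ destruct Hia as [d Hd]. apply (Rmult_le_reg_l m); [lra|]. rewrite Rmult_0_r.
  apply Hnn, Hd. unfold disc. rewrite Rminus_eq_0, Rabs_R0. apply cond_pos. }
destruct (interval_interior_nbhd I (m * a) b HI ltac:(nra) Hia Hib) as [del [Hdel Hint]].
assert (Hder' : forall s, m * a - del < s < b + del -> derivable_pt_lim f s (f' s))
  by (intros; apply Hder, Hint; auto).
rewrite (S_f_split f m x lam th a b) by (auto using Gamma_succ; try lra; apply Rgt_not_eq, Gamma_pos; auto).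
eapply Rle_trans; [apply Rabs_triang|]. rewrite Rmult_plus_distr_l.
apply Rplus_le_compat; apply scaled_side_bound; try apply rpow_ge0; try lra.
- apply (left_side_bound q f f' m alpha a b del); auto; lra.
- apply (right_side_bound q f f' m alpha a b del); auto; lra.
Qed.
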